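(* Let $N\ge3$ and suppose $\boldsymbol{\mathfrak h}\notin\mathrm{col}(C)$. Consider the optimization problem: maximize $\boldsymbol{\mathfrak b}\cdot\boldsymbol{\mathfrak h}$ over $\boldsymbol{\mathfrak b}\in\mathbb{R}^N$ subject to $\|\boldsymbol{\mathfrak b}\|_\infty\le1$ and $\boldsymbol{\mathfrak b}\perp\mathrm{col}(C)$. Then its optimal value equals $\min_{\mathbf v\in\mathrm{col}(C)}\|\boldsymbol{\mathfrak h}-\mathbf v\|_1 = 2\min_{S\in\mathfrak{S}}\|H-S\|$ (operator norm). Moreover, if $\boldsymbol{\mathfrak b}^\diamond$ is an optimal solution and $\boldsymbol\theta=\tfrac12\arccos\boldsymbol{\mathfrak b}^\diamond$ (entrywise), then the dephasing code associated with $\boldsymbol\theta$ satisfies $PSP\in\mathbb{R}P$ for all $S\in\mathfrak{S}$, $\langle0_L|H|1_L\rangle=0$, and $\langle0_L|H|0_L\rangle-\langle1_L|H|1_L\rangle=\boldsymbol{\mathfrak h}\cdot\boldsymbol{\mathfrak b}^\diamond=\min_{\mathbf v\in\mathrm{col}(C)}\|\boldsymbol{\mathfrak h}-\mathbf v\|_1>0$. Hence the state $\tfrac1{\sqrt2}(|0_L\rangle+|1_L\rangle)$ evolving under $\omega PHP$ for time $t$ has quantum Fisher information $t^2\min_{\mathbf v\in\mathrm{col}(C)}\|\boldsymbol{\mathfrak h}-\mathbf v\|_1^2=4t^2\min_{S\in\mathfrak S}\|H-S\|^2$.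
   Context: Qubits $1,\dots,N$; $Z_j$, $X_j$ denote the Pauli $Z$, $X$ operators on qubit $j$ of $(\mathbb{C}^2)^{\otimes N}$. For $\mathbf v\in\mathbb{R}^N$, $\mathbf v\cdot\mathbf Z:=\sum_j v_jZ_j$. Dephasing model: $\boldsymbol{\mathfrak h}\in\mathbb{R}^N$, $H=\tfrac12\boldsymbol{\mathfrak h}\cdot\mathbf Z$; $C$ is a real symmetric positive semidefinite $N\times N$ matrix with orthonormal eigenvectors $\mathbf v_1,\dots,\mathbf v_N$ and eigenvalues $\lambda_1,\dots,\lambda_N\ge0$; $L_j=\sqrt{\lambda_j}\,\mathbf v_j\cdot\mathbf Z$; $\mathrm{col}(C)$ is the column space of $C$; the Lindblad span $\mathfrak{S}$ is the real span of $I$, all $L_i$ and all $L_iL_j$. Dephasing code for $\boldsymbol\theta\in\mathbb{R}^N$: $|0_L\rangle=\bigotimes_{j=1}^N(\cos\theta_j|0\rangle+i\sin\theta_j|1\rangle)$, $|1_L\rangle=X^{\otimes N}|0_L\rangle$, $P=|0_L\rangle\langle0_L|+|1_L\rangle\langle1_L|$. $\|\cdot\|_1,\|\cdot\|_\infty$ are the $\ell^1$ and max norms on $\mathbb{R}^N$. For a pure state $|\psi\rangle$ under Hamiltonian $\omega K$ for time $t$, the quantum Fisher information is $4t^2(\langle\psi|K^2|\psi\rangle-\langle\psi|K|\psi\rangle^2)$. *)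

From Stdlib Require Import Reals Lra.
Open Scope R_scope.

Definition C := (R * R)%type.
Definition RtoC (x : R) : C := (x, 0).
Definition C0 : C := (0, 0).
Definition C1 : C := (1, 0).
Definition Ci : C := (0, 1).
Definition Cadd (a b : C) : C := (fst a + fst b, snd a + snd b).
Definition Copp (a : C) : C := (- fst a, - snd a).
Definition Csub (a b : C) : C := Cadd a (Copp b).
Definition Cmul (a b : C) : C :=
  (fst a * fst b - snd a * snd b, fst a * snd b + snd a * fst b).
Definition Cconj (a : C) : C := (fst a, - snd a).
Definition Cnorm2 (a : C) : R := fst a ^ 2 + snd a ^ 2.

Fixpoint Rsum (n : nat) (f : nat -> R) : R :=
  match n with O => 0 | S m => Rsum m f + f m end.
Fixpoint Csum (n : nat) (f : nat -> C) : C :=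
  match n with O => C0 | S m => Cadd (Csum m f) (f m) end.
Fixpoint Cprodn (n : nat) (f : nat -> C) : C :=
  match n with O => C1 | S m => Cmul (Cprodn m f) (f m) end.

(* ---------- N-qubit Hilbert space (C^2)^{⊗N} ≅ C^(2^N) ----------
   Basis index k < 2^N; bit j of k (Nat.testbit k j) is the value of qubit j
   (qubits are numbered 0 .. N-1). Vectors / operators are functions on
   indices; only indices < 2^N are meaningful. *)
Definition dim (N : nat) : nat := (2 ^ N)%nat.
Definition Vec := nat -> C.
Definition Op := nat -> nat -> C.

Definition opApply (N : nat) (A : Op) (v : Vec) : Vec :=
  fun i => Csum (dim N) (fun k => Cmul (A i k) (v k)).
Definition opMul (N : nat) (A B : Op) : Op :=
  fun i k => Csum (dim N) (fun m => Cmul (A i m) (B m k)).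
Definition opAdd (A B : Op) : Op := fun i k => Cadd (A i k) (B i k).
Definition opSub (A B : Op) : Op := fun i k => Csub (A i k) (B i k).
Definition opScale (c : C) (A : Op) : Op := fun i k => Cmul c (A i k).
Definition opId : Op := fun i k => if Nat.eqb i k then C1 else C0.

Definition inner (N : nat) (u v : Vec) : C :=
  Csum (dim N) (fun k => Cmul (Cconj (u k)) (v k)).
Definition braket (N : nat) (u : Vec) (A : Op) (v : Vec) : C :=
  inner N u (opApply N A v).
Definition vnorm (N : nat) (v : Vec) : R :=
  sqrt (Rsum (dim N) (fun k => Cnorm2 (v k))).

Definition OpNorm (N : nat) (A : Op) (r : R) : Prop :=
  is_lub (fun y => exists psi : Vec, vnorm N psi = 1 /\ y = vnorm N (opApply N A psi)) r.

Definition PauliZ (j : nat) : Op :=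
  fun i k => if Nat.eqb i k then (if Nat.testbit i j then RtoC (-1) else C1) else C0.
(* X^{⊗N} flips all N bits: |i> |-> |2^N-1-i> *)
Definition Xall (N : nat) : Op :=
  fun i k => if Nat.eqb k (dim N - 1 - i)%nat then C1 else C0.

Definition dotZ (N : nat) (v : nat -> R) : Op :=
  fun i k => Csum N (fun j => Cmul (RtoC (v j)) (PauliZ j i k)).

Definition Hmain (N : nat) (h : nat -> R) : Op := opScale (RtoC (1 / 2)) (dotZ N h).

(* L_j = sqrt(lambda_j) v_j . Z ; vv j is the j-th eigenvector of C *)
Definition Lind (N : nat) (lam : nat -> R) (vv : nat -> nat -> R) (j : nat) : Op :=
  opScale (RtoC (sqrt (lam j))) (dotZ N (vv j)).

Definition spanElt (N : nat) (lam : nat -> R) (vv : nat -> nat -> R)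
  (c0 : R) (c1 : nat -> R) (c2 : nat -> nat -> R) : Op :=
  fun i k =>
    Cadd (Cmul (RtoC c0) (opId i k))
      (Cadd (Csum N (fun a => Cmul (RtoC (c1 a)) (Lind N lam vv a i k)))
            (Csum N (fun a => Csum N (fun b =>
               Cmul (RtoC (c2 a b)) (opMul N (Lind N lam vv a) (Lind N lam vv b) i k))))).

Definition InSpan (N : nat) (lam : nat -> R) (vv : nat -> nat -> R) (S : Op) : Prop :=
  exists c0 c1 c2, S = spanElt N lam vv c0 c1 c2.

Definition zeroL (N : nat) (theta : nat -> R) : Vec :=
  fun k => Cprodn N (fun j =>
    if Nat.testbit k j then Cmul Ci (RtoC (sin (theta j))) else RtoC (cos (theta j))).
Definition oneL (N : nat) (theta : nat -> R) : Vec := opApply N (Xall N) (zeroL N theta).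
Definition projP (N : nat) (theta : nat -> R) : Op :=
  fun i k => Cadd (Cmul (zeroL N theta i) (Cconj (zeroL N theta k)))
                  (Cmul (oneL N theta i) (Cconj (oneL N theta k))).
Definition plusL (N : nat) (theta : nat -> R) : Vec :=
  fun k => Cmul (RtoC (1 / sqrt 2)) (Cadd (zeroL N theta k) (oneL N theta k)).

Definition QFI (N : nat) (t : R) (K : Op) (psi : Vec) : C :=
  Cmul (RtoC (4 * t ^ 2))
    (Csub (braket N psi (opMul N K K) psi) (Cmul (braket N psi K psi) (braket N psi K psi))).

Definition rdot (N : nat) (a b : nat -> R) : R := Rsum N (fun i => a i * b i).
Definition l1dist (N : nat) (a b : nat -> R) : R := Rsum N (fun i => Rabs (a i - b i)).
Definition inCol (N : nat) (Cm : nat -> nat -> R) (w : nat -> R) : Prop :=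
  exists x : nat -> R, forall i, (i < N)%nat -> w i = Rsum N (fun k => Cm i k * x k).
Definition Feasible (N : nat) (Cm : nat -> nat -> R) (b : nat -> R) : Prop :=
  (forall i, (i < N)%nat -> Rabs (b i) <= 1) /\
  (forall w, inCol N Cm w -> rdot N b w = 0).

Definition IsMaxOf (P : R -> Prop) (x : R) : Prop := P x /\ forall y, P y -> y <= x.
Definition IsMinOf (P : R -> Prop) (x : R) : Prop := P x /\ forall y, P y -> x <= y.

(* Every operator in play is diagonal in the computational basis, with diagonal entries of
   degree at most 2 in the Z-eigenvalues sigma_j = +-1; H is linear in them.

   The program max {b . h : |b|_oo <= 1, b _|_ col C} is the dual of min {|h - v|_1 : v in col C};
   strong duality is proved by eliminating the spanning vectors of col C one at a time, keeping
   a finite list of candidate maximizers, each elimination step being a minimization of a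
   convex piecewise-linear function of one variable.

   For theta = arccos(b)/2 the code states |0_L>, |1_L> are product states in which
   <Z_j> = +- b_j and <Z_i Z_j> = b_i b_j, while every product of at most two Z's has vanishing
   cross term <0_L| . |1_L> once N >= 3.  Hence P S P is proportional to P exactly when the
   linear part of S is orthogonal to b (which holds for b _|_ col C), and
   <0_L|H|0_L> - <1_L|H|1_L> = h . b.  The same two code states give the lower bound
   2 ||H - S|| >= h . b for every S in the span, and S = (1/2) v . Z with v = C x optimal
   attains ||H - S|| = |h - v|_1 / 2. *)

From Stdlib Require Import Reals Lra Lia List Arith Ring.
Import ListNotations.
Open Scope R_scope.
Set Bullet Behavior "Strict Subproofs".

Lemma Rsum_ext n f g : (forall i, (i < n)%nat -> f i = g i) -> Rsum n f = Rsum n g.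
Proof. induction n; simpl; intros H; auto. rewrite IHn by (intros; apply H; lia). rewrite H by lia; auto. Qed.

Lemma Rsum_add n f g : Rsum n (fun i => f i + g i) = Rsum n f + Rsum n g.
Proof. induction n; simpl; [lra|]. rewrite IHn; lra. Qed.

Lemma Rsum_scal n c f : Rsum n (fun i => c * f i) = c * Rsum n f.
Proof. induction n; simpl; [lra|]. rewrite IHn; lra. Qed.

Lemma Rsum_sub n f g : Rsum n (fun i => f i - g i) = Rsum n f - Rsum n g.
Proof. induction n; simpl; [lra|]. rewrite IHn; lra. Qed.

Lemma Rsum_zero n f : (forall i, (i < n)%nat -> f i = 0) -> Rsum n f = 0.
Proof. induction n; simpl; intros H; auto. rewrite IHn, H by (intros; try apply H; lia). lra. Qed.

Lemma Rsum_le n f g : (forall i, (i < n)%nat -> f i <= g i) -> Rsum n f <= Rsum n g.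
Proof.
  induction n; simpl; intros H; [lra|].
  assert (H1 := H n ltac:(lia)).
  assert (Rsum n f <= Rsum n g) by (apply IHn; intros; apply H; lia). lra.
Qed.

Lemma Rsum_nonneg n f : (forall i, (i < n)%nat -> 0 <= f i) -> 0 <= Rsum n f.
Proof. intros H. replace 0 with (Rsum n (fun _ => 0)) by (apply Rsum_zero; auto). apply Rsum_le; auto. Qed.

Lemma Rsum_swap n m f :
  Rsum n (fun i => Rsum m (fun j => f i j)) = Rsum m (fun j => Rsum n (fun i => f i j)).
Proof. induction n; simpl. rewrite Rsum_zero; auto. rewrite IHn, <- Rsum_add. auto. Qed.

Lemma Rsum_mul_Rsum n m f g : Rsum n f * Rsum m g = Rsum n (fun j => Rsum m (fun l => f j * g l)).
Proof. induction n; simpl. ring. rewrite <- IHn, Rsum_scal. ring. Qed.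

Lemma Rabs_Rsum_le n f : Rabs (Rsum n f) <= Rsum n (fun i => Rabs (f i)).
Proof. induction n; simpl. rewrite Rabs_R0; lra. eapply Rle_trans. apply Rabs_triang. lra. Qed.

Lemma Rsum_plus a b f : Rsum (a + b) f = Rsum a f + Rsum b (fun k => f (a + k)%nat).
Proof. induction b; simpl. rewrite Nat.add_0_r; lra. rewrite Nat.add_succ_r. simpl. rewrite IHb. lra. Qed.

Lemma Rsum_single n k f :
  (k < n)%nat -> (forall i, (i < n)%nat -> i <> k -> f i = 0) -> Rsum n f = f k.
Proof.
  induction n; intros Hk H; [lia|]. simpl. destruct (Nat.eq_dec k n).
  - subst. rewrite Rsum_zero. lra. intros; apply H; lia.
  - rewrite IHn by (try lia; intros; apply H; lia). rewrite (H n) by lia. lra.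
Qed.

Lemma Rsum_Rabs_eq0 n e :
  Rsum n (fun i => Rabs (e i)) = 0 -> forall i, (i < n)%nat -> e i = 0.
Proof.
  induction n; intros H i Hi; [lia|]. simpl in H.
  assert (0 <= Rsum n (fun i => Rabs (e i))) by (apply Rsum_nonneg; intros; apply Rabs_pos).
  assert (0 <= Rabs (e n)) by apply Rabs_pos.
  destruct (Nat.eq_dec i n) as [->|Hin].
  - destruct (Rcase_abs (e n)); [rewrite Rabs_left in * by auto|rewrite Rabs_right in * by auto]; lra.
  - apply IHn; [lra|lia].
Qed.

Lemma Rabs_le_1_bounds x : Rabs x <= 1 -> -1 <= x <= 1.
Proof. intros H. generalize (Rle_abs x) (Rle_abs (- x)). rewrite Rabs_Ropp. lra. Qed.

Lemma Rdiv_nonneg a b : 0 <= a -> 0 < b -> 0 <= a / b.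
Proof. apply Rle_mult_inv_pos. Qed.

(** * The upper envelope of finitely many lines *)

(* The envelope t |-> max_b (al b - t s b) is convex and piecewise linear; when it is
   nonnegative it has a minimum, and at a minimum some top line has slope -s <= 0 and another
   one slope -s >= 0.  The proof walks from a top line to the next breakpoint of the envelope,
   each time strictly decreasing the number of smaller slopes. *)
Section Envelope.
Variable A : Type.
Variable Bs : list A.
Variables al s : A -> R.

Definition line b t := al b - t * s b.
Definition on_top b t := forall b', In b' Bs -> line b' t <= line b t.

Definition balanced_point := exists t b1 b2, In b1 Bs /\ In b2 Bs /\ 0 <= s b1 /\ s b2 <= 0 /\
  on_top b1 t /\ line b2 t = line b1 t.

Lemma list_argmin (L : list A) (f : A -> R) :
  L <> nil -> exists x, In x L /\ forall y, In y L -> f x <= f y.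
Proof.
  induction L as [|a L IH]; intros Hn; [congruence|].
  destruct L as [|c L'].
  - exists a; split; [left; auto|]. intros y [<-|[]]; lra.
  - destruct IH as [x [Hx Hm]]; [congruence|].
    destruct (Rle_dec (f a) (f x)).
    + exists a; split; [left; auto|]. intros y [<-|Hy]; [lra|]. specialize (Hm y Hy); lra.
    + exists x; split; [right; auto|]. intros y [<-|Hy]; [lra|]. auto.
Qed.

Definition slope_below (c : R) (b : A) : bool := if Rlt_dec (s b) c then true else false.

Lemma slope_below_spec c b : slope_below c b = true <-> s b < c.
Proof. unfold slope_below. destruct (Rlt_dec (s b) c); split; intros; auto; try discriminate; lra. Qed.

Lemma filter_length_le (L : list A) (p q : A -> bool) :
  (forall y, In y L -> p y = true -> q y = true) ->
  (length (filter p L) <= length (filter q L))%nat.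
Proof.
  induction L as [|a L IH]; intros Hpq; simpl; auto.
  assert (H1 : forall y, In y L -> p y = true -> q y = true) by (intros; apply Hpq; simpl; auto).
  specialize (IH H1). destruct (p a) eqn:E.
  - rewrite (Hpq a) by (simpl; auto). simpl; lia.
  - destruct (q a); simpl; lia.
Qed.

Lemma filter_length_lt (L : list A) (p q : A -> bool) (x : A) :
  (forall y, In y L -> p y = true -> q y = true) -> In x L -> q x = true -> p x = false ->
  (length (filter p L) < length (filter q L))%nat.
Proof.
  induction L as [|a L IH]; intros Hpq Hx Hq Hp; [destruct Hx|].
  assert (H1 : forall y, In y L -> p y = true -> q y = true) by (intros; apply Hpq; simpl; auto).
  simpl. destruct Hx as [<-|Hx].
  - rewrite Hp, Hq. simpl. assert (H := filter_length_le L p q H1). lia.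
  - specialize (IH H1 Hx Hq Hp). destruct (p a) eqn:E.
    + rewrite (Hpq a) by (simpl; auto). simpl; lia.
    + destruct (q a); simpl; lia.
Qed.

Hypothesis top_nonneg : forall t, exists b, In b Bs /\ on_top b t /\ 0 <= line b t.

Lemma line_shift b t t' : line b t' = line b t - (t' - t) * s b.
Proof. unfold line. ring. Qed.

(* If no line decreased more slowly than the decreasing top line b0, the envelope would become
   negative far to the right. *)
Lemma top_has_smaller_slope t0 b0 : In b0 Bs -> on_top b0 t0 -> 0 < s b0 ->
  exists b, In b Bs /\ s b < s b0.
Proof.
  intros Hb0 Ha0 Hs0.
  set (T := t0 + (Rabs (line b0 t0) + 1) / s b0).
  destruct (top_nonneg T) as [b [Hb [_ HpT]]].
  destruct (Rlt_dec (s b) (s b0)) as [Hl|Hl]; [exists b; auto|exfalso].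
  assert (HT : T - t0 = (Rabs (line b0 t0) + 1) / s b0) by (unfold T; ring).
  assert (Hdrop : (T - t0) * s b0 = Rabs (line b0 t0) + 1) by (rewrite HT; field; lra).
  assert (0 <= T - t0) by (rewrite HT; apply Rdiv_nonneg; [generalize (Rabs_pos (line b0 t0))|]; lra).
  assert ((T - t0) * s b0 <= (T - t0) * s b) by (apply Rmult_le_compat_l; lra).
  rewrite (line_shift b t0) in HpT. specialize (Ha0 b Hb).
  generalize (Rle_abs (line b0 t0)). lra.
Qed.

(* The next breakpoint after t0: the first line of smaller slope to catch up with b0. *)
Lemma next_breakpoint t0 b0 : In b0 Bs -> on_top b0 t0 -> 0 < s b0 ->
  exists t1 b1, In b1 Bs /\ s b1 < s b0 /\ on_top b0 t1 /\ line b1 t1 = line b0 t1.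
Proof.
  intros Hb0 Ha0 Hs0.
  set (L0 := filter (slope_below (s b0)) Bs).
  set (tau := fun b => t0 + (line b0 t0 - line b t0) / (s b0 - s b)).
  destruct (list_argmin L0 tau) as [b1 [Hb1 Hm]].
  { destruct (top_has_smaller_slope t0 b0) as [b [Hb Hsb]]; auto.
    assert (In b L0) by (apply filter_In; split; auto; apply slope_below_spec; auto).
    destruct L0; [contradiction|congruence]. }
  apply filter_In in Hb1. destruct Hb1 as [Hb1 Hs1]. apply slope_below_spec in Hs1.
  exists (tau b1), b1. split; [auto|split; [auto|split]].
  - intros b Hb. rewrite (line_shift b t0), (line_shift b0 t0).
    assert (Hpos : 0 <= tau b1 - t0).
    { unfold tau. specialize (Ha0 b1 Hb1). ring_simplify (t0 + (line b0 t0 - line b1 t0) / (s b0 - s b1) - t0).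
      apply Rdiv_nonneg; lra. }
    specialize (Ha0 b Hb).
    destruct (Rlt_dec (s b) (s b0)) as [Hl|Hl].
    + assert (HbL : In b L0) by (apply filter_In; split; auto; apply slope_below_spec; auto).
      specialize (Hm b HbL). unfold tau at 2 in Hm.
      assert (Hle : tau b1 - t0 <= (line b0 t0 - line b t0) / (s b0 - s b)) by lra.
      apply (Rmult_le_compat_r (s b0 - s b)) in Hle; [|lra].
      replace ((line b0 t0 - line b t0) / (s b0 - s b) * (s b0 - s b))
        with (line b0 t0 - line b t0) in Hle by (field; lra).
      nra.
    + assert ((tau b1 - t0) * s b0 <= (tau b1 - t0) * s b) by (apply Rmult_le_compat_l; lra). lra.
  - unfold tau, line. field. lra.
Qed.

Lemma balanced_from_positive_slope : forall k t0 b0, In b0 Bs -> on_top b0 t0 -> 0 < s b0 ->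
  (length (filter (slope_below (s b0)) Bs) <= k)%nat -> balanced_point.
Proof.
  induction k as [k IHk] using (well_founded_induction Wf_nat.lt_wf).
  intros t0 b0 Hb0 Ha0 Hs0 Hlen.
  destruct (next_breakpoint t0 b0) as [t1 [b1 [Hb1 [Hs1 [Ha1 Heq]]]]]; auto.
  destruct (Rle_dec (s b1) 0) as [Hn|Hn].
  - exists t1, b0, b1. repeat split; auto; lra.
  - apply (IHk (length (filter (slope_below (s b1)) Bs))) with (t0 := t1) (b0 := b1); auto.
    + eapply Nat.lt_le_trans; [|exact Hlen].
      apply filter_length_lt with (x := b1); auto.
      * intros y _ Hy. apply slope_below_spec in Hy. apply slope_below_spec. lra.
      * apply slope_below_spec; auto.
      * destruct (slope_below (s b1) b1) eqn:E; auto. apply slope_below_spec in E. lra.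
    + intros b Hb. rewrite Heq. apply Ha1; auto.
    + lra.
Qed.

End Envelope.

Lemma envelope_balanced_point (A : Type) (Bs : list A) (al s : A -> R) :
  (forall t, exists b, In b Bs /\ on_top A Bs al s b t /\ 0 <= line A al s b t) ->
  balanced_point A Bs al s.
Proof.
  intros H. destruct (H 0) as [b0 [Hb0 [Ha0 _]]].
  destruct (Rtotal_order (s b0) 0) as [Hn|[Hz|Hp]].
  - (* reflect t |-> -t so that s b0 > 0 *)
    set (s' := fun b => - s b).
    assert (H' : forall t, exists b, In b Bs /\ on_top A Bs al s' b t /\ 0 <= line A al s' b t).
    { intros t. destruct (H (-t)) as [b [Hb [Ha Hp]]]. exists b.
      unfold on_top, line, s' in *. split; [auto|split; [|lra]].
      intros b' Hb'. specialize (Ha b' Hb'). lra. }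
    assert (Ha0' : on_top A Bs al s' b0 0).
    { unfold on_top, line, s' in *. intros b' Hb'. specialize (Ha0 b' Hb'). lra. }
    destruct (balanced_from_positive_slope A Bs al s' H' _ 0 b0 Hb0 Ha0' ltac:(unfold s'; lra) (le_n _))
      as [t [b1 [b2 [Hb1 [Hb2 [Hs1 [Hs2 [Ha Heq]]]]]]]].
    exists (-t), b2, b1. unfold s', on_top, line in *. repeat split; auto; try lra.
    intros b' Hb'. specialize (Ha b' Hb'). lra.
  - exists 0, b0, b0. repeat split; auto; lra.
  - eapply balanced_from_positive_slope; eauto.
Qed.

(** * Duality between the l1 distance to a subspace and a box-constrained program *)

Fixpoint in_span (n : nat) (ws : list (nat -> R)) (v : nat -> R) : Prop :=
  match ws with
  | nil => forall i, (i < n)%nat -> v i = 0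
  | w :: ws' => exists t u, in_span n ws' u /\ forall i, (i < n)%nat -> v i = t * w i + u i
  end.
Definition orth_to n ws b := forall w, In w ws -> rdot n b w = 0.
Definition in_box n (b : nat -> R) := forall i, (i < n)%nat -> Rabs (b i) <= 1.
Definition l1norm n (e : nat -> R) := Rsum n (fun i => Rabs (e i)).

Lemma rdot_linl n x y z a c : rdot n (fun i => a * x i + c * y i) z = a * rdot n x z + c * rdot n y z.
Proof. unfold rdot. rewrite <- !Rsum_scal, <- Rsum_add. apply Rsum_ext; intros; ring. Qed.

Lemma rdot_linr n x y z a c : rdot n z (fun i => a * x i + c * y i) = a * rdot n z x + c * rdot n z y.
Proof. unfold rdot. rewrite <- !Rsum_scal, <- Rsum_add. apply Rsum_ext; intros; ring. Qed.

Lemma rdot_ext n x y x' y' : (forall i, (i < n)%nat -> x i = x' i) ->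
  (forall i, (i < n)%nat -> y i = y' i) -> rdot n x y = rdot n x' y'.
Proof. intros H1 H2. unfold rdot. apply Rsum_ext; intros. rewrite H1, H2; auto. Qed.

Lemma rdot_comm n x y : rdot n x y = rdot n y x.
Proof. unfold rdot. apply Rsum_ext; intros; ring. Qed.

Lemma rdot_sub_r n b h v : rdot n b (fun i => h i - v i) = rdot n b h - rdot n b v.
Proof.
  rewrite (rdot_ext n b _ b (fun i => 1 * h i + (-1) * v i)) by (auto; intros; ring).
  rewrite rdot_linr. ring.
Qed.

Lemma l1norm_nonneg n e : 0 <= l1norm n e.
Proof. apply Rsum_nonneg; intros; apply Rabs_pos. Qed.

Lemma rdot_orth_span n ws b v : orth_to n ws b -> in_span n ws v -> rdot n b v = 0.
Proof.
  revert v. induction ws as [|w ws IH]; intros v Ho Hs; simpl in Hs.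
  - unfold rdot. apply Rsum_zero. intros. rewrite Hs; auto; ring.
  - destruct Hs as [t [u [Hu Hv]]].
    rewrite (rdot_ext n b v b (fun i => t * w i + 1 * u i)) by (auto; intros; rewrite Hv; auto; ring).
    rewrite rdot_linr, (Ho w) by (left; auto). rewrite IH; auto. ring.
    intros w' Hw'. apply Ho; right; auto.
Qed.

Lemma rdot_le_l1norm n b e : in_box n b -> rdot n b e <= l1norm n e.
Proof.
  intros Hb. unfold rdot, l1norm. apply Rsum_le. intros i Hi.
  specialize (Hb i Hi). eapply Rle_trans. apply Rle_abs. rewrite Rabs_mult.
  generalize (Rabs_pos (e i)); nra.
Qed.

Lemma weak_duality n b h v : in_box n b -> rdot n b v = 0 ->
  rdot n b h <= l1norm n (fun i => h i - v i).
Proof.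
  intros Hb Hv. replace (rdot n b h) with (rdot n b (fun i => h i - v i)).
  - apply rdot_le_l1norm; auto.
  - rewrite rdot_sub_r, Hv. ring.
Qed.

Definition upd (f : nat -> R) m x := fun i => if Nat.eqb i m then x else f i.

Fixpoint sign_vectors n : list (nat -> R) :=
  match n with
  | 0 => [fun _ => 1]
  | S m => flat_map (fun f => [upd f m 1; upd f m (-1)]) (sign_vectors m)
  end.

Lemma sign_vectors_pm n f : In f (sign_vectors n) -> forall i, f i = 1 \/ f i = -1.
Proof.
  revert f; induction n; simpl; intros f Hf i.
  - destruct Hf as [<-|[]]; auto.
  - apply in_flat_map in Hf. destruct Hf as [g [Hg Hf]].
    destruct Hf as [<-|[<-|[]]]; unfold upd; destruct (Nat.eqb i n); auto.
Qed.

Lemma sign_vector_of n h :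
  exists f, In f (sign_vectors n) /\ forall i, (i < n)%nat -> f i * h i = Rabs (h i).
Proof.
  induction n.
  - exists (fun _ => 1). split; [left; auto|]. intros; lia.
  - destruct IHn as [f [Hf Hh]].
    exists (upd f n (if Rle_dec 0 (h n) then 1 else -1)). split.
    + simpl. apply in_flat_map. exists f. split; auto. destruct (Rle_dec 0 (h n)); simpl; auto.
    + intros i Hi. unfold upd. destruct (Nat.eqb i n) eqn:E.
      * apply Nat.eqb_eq in E; subst. destruct (Rle_dec 0 (h n)).
        rewrite Rabs_right; lra. rewrite Rabs_left; lra.
      * apply Nat.eqb_neq in E. apply Hh. lia.
Qed.

(* Given box vectors whose slopes rdot b w have opposite signs, the convex combination
   with slope 0 is still in the box and orthogonal to w. *)
Section Elimination.
Variables (n : nat) (w : nat -> R) (ws : list (nat -> R)) (Bs : list (nat -> R)).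
Hypothesis Bs_feasible : forall b, In b Bs -> in_box n b /\ orth_to n ws b.

Let sl b := rdot n b w.

Definition cancel_slope (b1 b2 : nat -> R) : nat -> R :=
  let mu := - sl b2 / (sl b1 - sl b2) in fun i => mu * b1 i + (1 - mu) * b2 i.

Definition eliminate : list (nat -> R) :=
  flat_map (fun b1 =>
    if Req_EM_T (sl b1) 0 then [b1]
    else if Rlt_dec 0 (sl b1) then
      flat_map (fun b2 => if Rlt_dec (sl b2) 0 then [cancel_slope b1 b2] else []) Bs
    else []) Bs.

Lemma cancel_slope_spec b1 b2 : In b1 Bs -> In b2 Bs -> 0 < sl b1 -> sl b2 < 0 ->
  in_box n (cancel_slope b1 b2) /\ orth_to n (w :: ws) (cancel_slope b1 b2) /\
  exists mu, 0 <= mu <= 1 /\ mu * sl b1 + (1 - mu) * sl b2 = 0 /\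
    forall z, rdot n (cancel_slope b1 b2) z = mu * rdot n b1 z + (1 - mu) * rdot n b2 z.
Proof.
  intros H1 H2 Hs1 Hs2. set (mu := - sl b2 / (sl b1 - sl b2)).
  assert (Hmu0 : 0 <= mu) by (apply Rdiv_nonneg; lra).
  assert (Hmu1 : mu <= 1).
  { apply (Rmult_le_reg_r (sl b1 - sl b2)); [lra|].
    unfold mu, Rdiv. rewrite Rmult_assoc, Rinv_l by lra. lra. }
  assert (Hmu : mu * sl b1 + (1 - mu) * sl b2 = 0) by (unfold mu; field; lra).
  assert (Hz : forall z, rdot n (cancel_slope b1 b2) z = mu * rdot n b1 z + (1 - mu) * rdot n b2 z)
    by (intros z; apply rdot_linl).
  destruct (Bs_feasible b1 H1) as [Hb1 O1], (Bs_feasible b2 H2) as [Hb2 O2].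
  split; [|split; [|exists mu; auto]].
  - intros i Hi. specialize (Hb1 i Hi). specialize (Hb2 i Hi). unfold cancel_slope. fold mu.
    eapply Rle_trans. apply Rabs_triang. rewrite !Rabs_mult.
    rewrite (Rabs_right mu), (Rabs_right (1 - mu)) by lra. nra.
  - intros w' [<-|Hw']; rewrite Hz.
    + exact Hmu.
    + rewrite O1, O2 by auto. ring.
Qed.

Lemma eliminate_feasible b : In b eliminate -> in_box n b /\ orth_to n (w :: ws) b.
Proof.
  intros Hb. apply in_flat_map in Hb. destruct Hb as [b1 [Hb1 Hb]].
  destruct (Req_EM_T (sl b1) 0) as [E|E].
  - destruct Hb as [<-|[]]. destruct (Bs_feasible b1 Hb1) as [Hbx Ho]. split; auto.
    intros w' [<-|Hw']; auto.
  - destruct (Rlt_dec 0 (sl b1)); [|destruct Hb].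
    apply in_flat_map in Hb. destruct Hb as [b2 [Hb2 Hb]].
    destruct (Rlt_dec (sl b2) 0); [|destruct Hb]. destruct Hb as [<-|[]].
    destruct (cancel_slope_spec b1 b2) as [? [? _]]; auto.
Qed.

Lemma eliminate_flat b : In b Bs -> sl b = 0 -> In b eliminate.
Proof.
  intros Hb E. apply in_flat_map. exists b. split; auto.
  destruct (Req_EM_T (sl b) 0); [left; auto|congruence].
Qed.

Lemma eliminate_cancel b1 b2 : In b1 Bs -> In b2 Bs -> 0 < sl b1 -> sl b2 < 0 ->
  In (cancel_slope b1 b2) eliminate.
Proof.
  intros Hb1 Hb2 P1 P2. apply in_flat_map. exists b1. split; auto.
  destruct (Req_EM_T (sl b1) 0); [lra|]. destruct (Rlt_dec 0 (sl b1)); [|lra].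
  apply in_flat_map. exists b2. split; auto.
  destruct (Rlt_dec (sl b2) 0); [left; auto|lra].
Qed.

End Elimination.

(* Strong duality on a finite spanning list, with a finite set of candidate maximizers that
   does not depend on h: this is what makes the induction on the spanning list go through. *)
Theorem l1_duality_span n ws : exists Bs, (forall b, In b Bs -> in_box n b /\ orth_to n ws b) /\
  forall h, exists b v, In b Bs /\ in_span n ws v /\ rdot n b h = l1norm n (fun i => h i - v i).
Proof.
  induction ws as [|w ws IH].
  - exists (sign_vectors n). split.
    + intros b Hb. split; [|intros w []].
      intros i _. destruct (sign_vectors_pm n b Hb i) as [E|E]; rewrite E;
        unfold Rabs; destruct (Rcase_abs _); lra.
    + intros h. destruct (sign_vector_of n h) as [f [Hf Hh]]. exists f, (fun _ => 0).
      split; [auto|split; [simpl; auto|]].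
      unfold rdot, l1norm. apply Rsum_ext. intros. rewrite Hh; auto. f_equal; ring.
  - destruct IH as [Bs [HB HD]].
    exists (eliminate n w Bs). split; [apply eliminate_feasible; auto|].
    intros h. set (sl := fun b => rdot n b w).
    set (ht := fun t i => h i - t * w i).
    assert (Hell : forall b t, rdot n b (ht t) = line _ (fun b => rdot n b h) sl b t).
    { intros b t. unfold ht, line, sl.
      rewrite (rdot_ext n b _ b (fun i => 1 * h i + (-t) * w i)) by (auto; intros; ring).
      rewrite rdot_linr. ring. }
    assert (Hbelow : forall t b v, In b Bs -> in_span n ws v ->
              line _ (fun b => rdot n b h) sl b t <= l1norm n (fun i => ht t i - v i)).
    { intros t b v Hb Hv. rewrite <- Hell. destruct (HB b Hb).
      apply weak_duality; auto. eapply rdot_orth_span; eauto. }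
    assert (Hact : forall t, exists b, In b Bs /\ on_top _ Bs (fun b => rdot n b h) sl b t /\
                                 0 <= line _ (fun b => rdot n b h) sl b t).
    { intros t. destruct (HD (ht t)) as [b [v [Hb [Hv He]]]]. exists b.
      rewrite <- Hell, He. split; [auto|split; [|apply l1norm_nonneg]].
      intros b' Hb'. rewrite <- (Hell b), He. apply (Hbelow t b' v); auto. }
    destruct (envelope_balanced_point _ Bs _ _ Hact)
      as [t [b1 [b2 [Hb1 [Hb2 [Hs1 [Hs2 [Ha Heq]]]]]]]].
    destruct (HD (ht t)) as [bt [vt [Hbt [Hvt Het]]]].
    set (m := l1norm n (fun i => ht t i - vt i)).
    assert (E1 : line _ (fun b => rdot n b h) sl b1 t = m).
    { apply Rle_antisym; [apply Hbelow; auto|]. unfold m. rewrite <- Het, Hell. apply Ha; auto. }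
    assert (E2 : line _ (fun b => rdot n b h) sl b2 t = m) by lra.
    unfold line in E1, E2.
    set (v' := fun i => t * w i + vt i).
    assert (Hv' : in_span n (w :: ws) v') by (simpl; exists t, vt; split; auto).
    assert (Hl : m = l1norm n (fun i => h i - v' i)).
    { unfold m, l1norm. apply Rsum_ext; intros. unfold ht, v'. f_equal; ring. }
    destruct (Req_EM_T (sl b1) 0) as [Z1|Z1]; [|destruct (Req_EM_T (sl b2) 0) as [Z2|Z2]].
    + exists b1, v'. split; [apply eliminate_flat; auto|split; auto]. rewrite Z1 in E1. lra.
    + exists b2, v'. split; [apply eliminate_flat; auto|split; auto]. rewrite Z2 in E2. lra.
    + assert (P1 : 0 < sl b1) by lra. assert (P2 : sl b2 < 0) by lra.
      exists (cancel_slope n w b1 b2), v'.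
      split; [apply eliminate_cancel; auto|split; auto].
      destruct (cancel_slope_spec n w ws Bs HB b1 b2) as [_ [_ [mu [_ [Hmu Hz]]]]]; auto.
      rewrite Hz, <- Hl. fold (sl b1) (sl b2) in Hmu.
      replace (rdot n b1 h) with (m + t * sl b1) by lra.
      replace (rdot n b2 h) with (m + t * sl b2) by lra.
      transitivity (m + t * (mu * sl b1 + (1 - mu) * sl b2)); [ring|]. rewrite Hmu. ring.
Qed.

Fixpoint columns (Cm : nat -> nat -> R) (m : nat) : list (nat -> R) :=
  match m with 0 => nil | S m' => (fun i => Cm i m') :: columns Cm m' end.

Lemma in_span_columns n Cm m v : in_span n (columns Cm m) v <->
  exists x, forall i, (i < n)%nat -> v i = Rsum m (fun k => Cm i k * x k).
Proof.
  revert v; induction m; simpl; intros v; split.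
  - intros Hv. exists (fun _ => 0). auto.
  - intros [x Hx]. auto.
  - intros [t [u [Hu Hv]]]. destruct (proj1 (IHm u) Hu) as [x Hx].
    exists (fun k => if Nat.eqb k m then t else x k). intros i Hi. rewrite (Hv i Hi), (Hx i Hi).
    simpl Rsum. rewrite Nat.eqb_refl.
    rewrite (Rsum_ext m (fun k => Cm i k * (if Nat.eqb k m then t else x k)) (fun k => Cm i k * x k)); [ring|].
    intros k Hk. destruct (Nat.eqb_spec k m); [lia|auto].
  - intros [x Hx]. exists (x m), (fun i => Rsum m (fun k => Cm i k * x k)). split.
    + apply IHm. exists x; auto.
    + intros i Hi. rewrite Hx; auto. ring.
Qed.

Lemma inCol_columns N Cm v : inCol N Cm v <-> in_span N (columns Cm N) v.
Proof. rewrite in_span_columns. reflexivity. Qed.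

Lemma Feasible_weak_duality N Cm b h v : Feasible N Cm b -> inCol N Cm v -> rdot N b h <= l1dist N h v.
Proof. intros [Hb Ho] Hv. apply weak_duality; auto. Qed.

Theorem l1_duality N Cm h : exists b v, Feasible N Cm b /\ inCol N Cm v /\ rdot N b h = l1dist N h v.
Proof.
  destruct (l1_duality_span N (columns Cm N)) as [Bs [HB HD]].
  destruct (HD h) as [b [v [Hb [Hv He]]]]. destruct (HB b Hb) as [Hbx Ho].
  exists b, v. split; [|split; [apply inCol_columns; auto|exact He]].
  split; auto. intros w Hw. apply inCol_columns in Hw. eapply rdot_orth_span; eauto.
Qed.

Lemma l1dist_pos N Cm h v : ~ inCol N Cm h -> inCol N Cm v -> 0 < l1dist N h v.
Proof.
  intros hnot [x Hx]. destruct (Rle_lt_or_eq_dec 0 (l1dist N h v)) as [|E]; auto.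
  - apply Rsum_nonneg; intros; apply Rabs_pos.
  - exfalso. apply hnot. exists x. intros i Hi. rewrite <- Hx by auto.
    assert (Z := Rsum_Rabs_eq0 N (fun i => h i - v i) (eq_sym E) i Hi). simpl in Z. lra.
Qed.

(** * The spectral decomposition of [C] *)

From mathcomp Require all_boot all_algebra Rstruct.

Module OrthonormalColumns.
Import all_boot all_algebra Rstruct GRing.Theory.
Local Open Scope ring_scope.

Lemma big_Rsum n (f : nat -> R) : (\sum_(i < n) f i)%R = Rsum n f.
Proof.
  elim: n => [|n IH]; first by rewrite big_ord0.
  by rewrite big_ord_recr /= IH.
Qed.

Lemma ord_eqb n (a b : 'I_n) : Nat.eqb a b = (a == b).
Proof. by case: (Nat.eqb_spec a b) => [/val_inj -> | E]; [rewrite eqxx | apply/esym/eqP => /(congr1 val)]. Qed.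

(* A square matrix with orthonormal rows has orthonormal columns: V V^T = 1 forces V^T V = 1. *)
Lemma orthonormal_columns N (vv : nat -> nat -> R) :
  (forall a b, lt a N -> lt b N -> rdot N (vv a) (vv b) = if Nat.eqb a b then R1 else R0) ->
  forall i j, lt i N -> lt j N ->
  Rsum N (fun a => Rmult (vv a i) (vv a j)) = if Nat.eqb i j then R1 else R0.
Proof.
  move=> Horth i j Hi Hj.
  pose V := (\matrix_(a < N, k < N) vv a k : 'M[R]_N).
  have VVt : V *m V^T = 1%:M.
  { apply/matrixP => a b; rewrite !mxE.
    rewrite (eq_bigr (fun k : 'I_N => vv a k * vv b k)); last by move=> k _; rewrite !mxE.
    rewrite (big_Rsum N (fun k => vv a k * vv b k)) -/(rdot N (vv a) (vv b)) Horth; try exact/ltP.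
    by rewrite ord_eqb; case: (a == b). }
  pose i' := Ordinal (introT ltP Hi); pose j' := Ordinal (introT ltP Hj).
  have := congr1 (fun M : 'M[R]_N => M i' j') (mulmx1C VVt).
  rewrite /= !mxE (eq_bigr (fun a : 'I_N => vv a i * vv a j)); last by move=> a _; rewrite !mxE.
  by rewrite (big_Rsum N (fun a => vv a i * vv a j)) => ->; rewrite -(ord_eqb _ i' j') /=; case: (i =? j).
Qed.

End OrthonormalColumns.

Section Spectral.
Variables (N : nat) (Cm : nat -> nat -> R) (lam : nat -> R) (vv : nat -> nat -> R).
Hypothesis vorth : forall a b, (a < N)%nat -> (b < N)%nat ->
  rdot N (vv a) (vv b) = if Nat.eqb a b then 1 else 0.
Hypothesis veig : forall a i, (a < N)%nat -> (i < N)%nat ->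
  Rsum N (fun k => Cm i k * vv a k) = lam a * vv a i.

Lemma spectral_expansion x j : (j < N)%nat ->
  Rsum N (fun a => lam a * rdot N (vv a) x * vv a j) = Rsum N (fun k => Cm j k * x k).
Proof.
  intros Hj.
  rewrite (Rsum_ext N _ (fun a => Rsum N (fun k => Rsum N (fun m => vv a k * x k * (Cm j m * vv a m))))).
  2:{ intros a Ha. rewrite <- Rsum_mul_Rsum. rewrite veig by auto. unfold rdot. ring. }
  rewrite Rsum_swap.
  rewrite (Rsum_ext N _ (fun k => Rsum N (fun m => x k * Cm j m * Rsum N (fun a => vv a k * vv a m)))).
  2:{ intros k Hk. rewrite Rsum_swap. apply Rsum_ext. intros m Hm. rewrite <- Rsum_scal.
      apply Rsum_ext; intros; ring. }
  apply Rsum_ext. intros k Hk. rewrite (Rsum_single N k); auto.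
  - rewrite OrthonormalColumns.orthonormal_columns by auto. rewrite Nat.eqb_refl. ring.
  - intros m Hm Hne. rewrite OrthonormalColumns.orthonormal_columns by auto.
    destruct (Nat.eqb_spec k m); [lia|ring].
Qed.

(* Only the eigenvectors with [lam a > 0] lie in the column space; for the others the
   factor [sqrt (lam a)] vanishes. *)
Lemma Feasible_orth_Lindblad b a : Feasible N Cm b -> (a < N)%nat ->
  sqrt (lam a) * rdot N (vv a) b = 0.
Proof.
  intros [_ Hb] Ha. destruct (Rtotal_order (lam a) 0) as [Hn|[E|Hp]].
  - rewrite sqrt_neg_0 by lra. ring.
  - rewrite E, sqrt_0. ring.
  - rewrite rdot_comm, Hb; [ring|]. exists (fun k => vv a k / lam a). intros i Hi.
    rewrite (Rsum_ext N _ (fun k => / lam a * (Cm i k * vv a k))) by (intros; unfold Rdiv; ring).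
    rewrite Rsum_scal, veig by auto. field. lra.
Qed.

End Spectral.

Lemma pow2_S n : (2 ^ S n = 2 ^ n + 2 ^ n)%nat.
Proof. rewrite Nat.pow_succ_r'. lia. Qed.

Lemma bit_high n k : (k < 2 ^ n)%nat -> Nat.testbit k n = false.
Proof. intros H. apply (Nat.testbit_unique k n false k 0); simpl; lia. Qed.

Lemma bit_top n k : (k < 2 ^ n)%nat -> Nat.testbit (2 ^ n + k) n = true.
Proof. intros H. apply (Nat.testbit_unique _ n true k 0); simpl; lia. Qed.

Lemma bit_low n k j : (k < 2 ^ n)%nat -> (j < n)%nat -> Nat.testbit (2 ^ n + k) j = Nat.testbit k j.
Proof.
  intros H Hj. rewrite <- (Nat.mod_pow2_bits_low (2 ^ n + k) n j) by auto.
  replace (2 ^ n + k)%nat with (k + 1 * 2 ^ n)%nat by lia. rewrite Nat.Div0.mod_add.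
  rewrite Nat.mod_small; auto.
Qed.

Lemma bit_complement n k j : (k < 2 ^ n)%nat -> (j < n)%nat ->
  Nat.testbit (2 ^ n - 1 - k) j = negb (Nat.testbit k j).
Proof.
  revert k j. induction n; intros k j Hk Hj; [lia|].
  rewrite pow2_S in *. destruct (Nat.lt_ge_cases k (2 ^ n)) as [Hl|Hl].
  - replace (2 ^ n + 2 ^ n - 1 - k)%nat with (2 ^ n + (2 ^ n - 1 - k))%nat by lia.
    destruct (Nat.eq_dec j n) as [->|Hjn].
    + rewrite bit_top by lia. rewrite bit_high by auto. auto.
    + rewrite bit_low by lia. apply IHn; lia.
  - replace (2 ^ n + 2 ^ n - 1 - k)%nat with (2 ^ n - 1 - (k - 2 ^ n))%nat by lia.
    replace k with (2 ^ n + (k - 2 ^ n))%nat at 2 by lia.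
    destruct (Nat.eq_dec j n) as [->|Hjn].
    + rewrite bit_top by lia. rewrite bit_high by lia. auto.
    + rewrite bit_low by lia. apply IHn; lia.
Qed.

Lemma bit_pattern n (P : nat -> bool) :
  exists k, (k < 2 ^ n)%nat /\ forall j, (j < n)%nat -> Nat.testbit k j = P j.
Proof.
  induction n.
  - exists 0%nat. simpl. split; [lia|]. intros; lia.
  - destruct IHn as [k [Hk HP]].
    exists ((if P n then 2 ^ n else 0) + k)%nat. rewrite pow2_S. split.
    + destruct (P n); lia.
    + intros j Hj. destruct (Nat.eq_dec j n) as [->|Hjn].
      * destruct (P n) eqn:E. rewrite bit_top; auto. simpl. apply bit_high; auto.
      * destruct (P n). rewrite bit_low by lia. apply HP; lia. simpl. apply HP; lia.
Qed.

Fixpoint Rprod (n : nat) (f : nat -> R) : R :=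
  match n with O => 1 | S m => Rprod m f * f m end.

Lemma Rprod_ext n f g : (forall i, (i < n)%nat -> f i = g i) -> Rprod n f = Rprod n g.
Proof. induction n; simpl; intros H; auto. rewrite IHn by (intros; apply H; lia). rewrite H by lia; auto. Qed.

Lemma Rprod_mul n f g : Rprod n (fun i => f i * g i) = Rprod n f * Rprod n g.
Proof. induction n; simpl; [ring|]. rewrite IHn; ring. Qed.

Lemma Rprod_one n : Rprod n (fun _ => 1) = 1.
Proof. induction n; simpl; auto. rewrite IHn; ring. Qed.

Lemma Rprod_single n i x : (i < n)%nat -> Rprod n (fun j => if Nat.eqb j i then x else 1) = x.
Proof.
  induction n; intros Hi; [lia|]. simpl. destruct (Nat.eq_dec i n) as [->|Hin].
  - rewrite Nat.eqb_refl. rewrite (Rprod_ext n _ (fun _ => 1)). rewrite Rprod_one; ring.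
    intros j Hj. destruct (Nat.eqb_spec j n); [lia|auto].
  - rewrite IHn by lia. destruct (Nat.eqb_spec n i); [lia|ring].
Qed.

Lemma Rprod_pair n i l x y : (i < n)%nat -> (l < n)%nat -> i <> l ->
  Rprod n (fun j => if Nat.eqb j i then x else if Nat.eqb j l then y else 1) = x * y.
Proof.
  intros Hi Hl Hil.
  rewrite (Rprod_ext n _ (fun j => (if Nat.eqb j i then x else 1) * (if Nat.eqb j l then y else 1))).
  - rewrite Rprod_mul, !Rprod_single; auto.
  - intros j Hj. destruct (Nat.eqb_spec j i), (Nat.eqb_spec j l); subst; try lia; ring.
Qed.

Lemma Rprod_zero n f j : (j < n)%nat -> f j = 0 -> Rprod n f = 0.
Proof.
  induction n; intros Hj Hf; [lia|]. simpl. destruct (Nat.eq_dec j n) as [->|Hjn].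
  - rewrite Hf; ring.
  - rewrite IHn by (auto; lia). ring.
Qed.

Lemma Rsum_bits_Rprod n (g : nat -> bool -> R) :
  Rsum (2 ^ n) (fun k => Rprod n (fun j => g j (Nat.testbit k j))) =
  Rprod n (fun j => g j false + g j true).
Proof.
  induction n.
  - simpl. ring.
  - rewrite pow2_S, Rsum_plus. cbn [Rprod]. rewrite <- IHn.
    rewrite (Rsum_ext (2 ^ n) (fun k => Rprod n (fun j => g j (Nat.testbit k j)) * g n (Nat.testbit k n))
                     (fun k => g n false * Rprod n (fun j => g j (Nat.testbit k j)))).
    2:{ intros k Hk. rewrite bit_high by auto. ring. }
    rewrite (Rsum_ext (2 ^ n)
               (fun k => Rprod n (fun j => g j (Nat.testbit (2 ^ n + k) j)) * g n (Nat.testbit (2 ^ n + k) n))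
                     (fun k => g n true * Rprod n (fun j => g j (Nat.testbit k j)))).
    2:{ intros k Hk. rewrite bit_top by auto. rewrite (Rprod_ext n _ (fun j => g j (Nat.testbit k j))). ring.
        intros j Hj. rewrite bit_low; auto. }
    rewrite !Rsum_scal. ring.
Qed.

Lemma Ceq (a b : C) : fst a = fst b -> snd a = snd b -> a = b.
Proof. destruct a, b; simpl; intros; subst; auto. Qed.

Ltac Csolve := repeat match goal with x : C |- _ => destruct x end;
  unfold Cadd, Cmul, Csub, Copp, Cconj, RtoC, C0, C1, Ci, Cnorm2 in *; simpl; apply Ceq; simpl; ring.

Lemma C_ring : ring_theory C0 C1 Cadd Cmul Csub Copp (@eq C).
Proof. constructor; intros; Csolve. Qed.
Add Ring Cring : C_ring.

Lemma RtoC_add x y : RtoC (x + y) = Cadd (RtoC x) (RtoC y). Proof. Csolve. Qed.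
Lemma RtoC_mul x y : RtoC (x * y) = Cmul (RtoC x) (RtoC y). Proof. Csolve. Qed.
Lemma RtoC_sub x y : RtoC (x - y) = Csub (RtoC x) (RtoC y). Proof. Csolve. Qed.
Lemma RtoC_0 : RtoC 0 = C0. Proof. Csolve. Qed.
Lemma RtoC_1 : RtoC 1 = C1. Proof. Csolve. Qed.
Lemma Cconj_mul a b : Cconj (Cmul a b) = Cmul (Cconj a) (Cconj b). Proof. Csolve. Qed.
Lemma Cconj_add a b : Cconj (Cadd a b) = Cadd (Cconj a) (Cconj b). Proof. Csolve. Qed.
Lemma Cconj_RtoC x : Cconj (RtoC x) = RtoC x. Proof. Csolve. Qed.
Lemma Cmul_conj_self a : Cmul (Cconj a) a = RtoC (Cnorm2 a). Proof. Csolve. Qed.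
Lemma Cnorm2_mul a b : Cnorm2 (Cmul a b) = Cnorm2 a * Cnorm2 b.
Proof. destruct a, b; unfold Cnorm2, Cmul; simpl; ring. Qed.
Lemma Cnorm2_RtoC x : Cnorm2 (RtoC x) = x * x. Proof. unfold Cnorm2, RtoC; simpl; ring. Qed.
Lemma Cnorm2_nonneg a : 0 <= Cnorm2 a. Proof. destruct a; unfold Cnorm2; simpl; nra. Qed.

Lemma Csum_ext n f g : (forall i, (i < n)%nat -> f i = g i) -> Csum n f = Csum n g.
Proof. induction n; simpl; intros H; auto. rewrite IHn by (intros; apply H; lia). rewrite H by lia; auto. Qed.
Lemma Csum_add n f g : Csum n (fun i => Cadd (f i) (g i)) = Cadd (Csum n f) (Csum n g).
Proof. induction n; simpl. Csolve. rewrite IHn; ring. Qed.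
Lemma Csum_scal n c f : Csum n (fun i => Cmul c (f i)) = Cmul c (Csum n f).
Proof. induction n; simpl. Csolve. rewrite IHn; ring. Qed.
Lemma Csum_zero n f : (forall i, (i < n)%nat -> f i = C0) -> Csum n f = C0.
Proof. induction n; simpl; intros H; auto. rewrite IHn, H by (intros; try apply H; lia). ring. Qed.
Lemma Csum_RtoC n f : Csum n (fun k => RtoC (f k)) = RtoC (Rsum n f).
Proof. induction n; simpl. Csolve. rewrite IHn, RtoC_add; auto. Qed.
Lemma Csum_single n k f : (k < n)%nat -> (forall i, (i < n)%nat -> i <> k -> f i = C0) -> Csum n f = f k.
Proof.
  induction n; intros Hk H; [lia|]. simpl. destruct (Nat.eq_dec k n).
  - subst. rewrite Csum_zero. ring. intros; apply H; lia.
  - rewrite IHn by (try lia; intros; apply H; lia). rewrite (H n) by lia. ring.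
Qed.

Lemma Cprodn_ext n f g : (forall i, (i < n)%nat -> f i = g i) -> Cprodn n f = Cprodn n g.
Proof. induction n; simpl; intros H; auto. rewrite IHn by (intros; apply H; lia). rewrite H by lia; auto. Qed.
Lemma Cprodn_mul n f g : Cprodn n (fun i => Cmul (f i) (g i)) = Cmul (Cprodn n f) (Cprodn n g).
Proof. induction n; simpl. Csolve. rewrite IHn; ring. Qed.
Lemma Cprodn_conj n f : Cconj (Cprodn n f) = Cprodn n (fun i => Cconj (f i)).
Proof. induction n; simpl. Csolve. rewrite Cconj_mul, IHn; auto. Qed.
Lemma Cprodn_RtoC n f : Cprodn n (fun i => RtoC (f i)) = RtoC (Rprod n f).
Proof. induction n; simpl. Csolve. rewrite IHn, RtoC_mul; auto. Qed.
Lemma Cnorm2_prod n f : Cnorm2 (Cprodn n f) = Rprod n (fun i => Cnorm2 (f i)).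
Proof. induction n; simpl. unfold Cnorm2, C1; simpl; ring. rewrite Cnorm2_mul, IHn; auto. Qed.

(** * Moments of Pauli-Z eigenvalues in product states *)

Definition sgn (b : bool) : R := if b then -1 else 1.

(* eigenvalue of Z_j on the basis vector |k> *)
Definition sigma (j k : nat) : R := sgn (Nat.testbit k j).

Definition expect N (w d : nat -> R) : R := Rsum (dim N) (fun k => w k * d k).

Definition prod_weight N (W : nat -> bool -> R) (k : nat) : R := Rprod N (fun j => W j (Nat.testbit k j)).

Definition sign_quad N (c0 : R) (l : nat -> R) (q : nat -> nat -> R) (k : nat) : R :=
  c0 + Rsum N (fun j => l j * sigma j k) + Rsum N (fun j => Rsum N (fun m => q j m * (sigma j k * sigma m k))).

Lemma sigma_sq j k : sigma j k * sigma j k = 1.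
Proof. unfold sigma, sgn. destruct (Nat.testbit k j); ring. Qed.

Lemma sigma_prod_weight N i k : (i < N)%nat ->
  sigma i k = prod_weight N (fun j bit => if Nat.eqb j i then sgn bit else 1) k.
Proof.
  intros Hi. unfold prod_weight, sigma. rewrite <- (Rprod_single N i (sgn (Nat.testbit k i))) by auto.
  apply Rprod_ext. intros j Hj. destruct (Nat.eqb_spec j i); subst; auto.
Qed.

Lemma expect_ext N w d d' : (forall k, (k < dim N)%nat -> d k = d' k) -> expect N w d = expect N w d'.
Proof. intros H. unfold expect. apply Rsum_ext; intros; rewrite H; auto. Qed.

Lemma expect_lin N w a c d1 d2 :
  expect N w (fun k => a * d1 k + c * d2 k) = a * expect N w d1 + c * expect N w d2.
Proof. unfold expect. rewrite <- !Rsum_scal, <- Rsum_add. apply Rsum_ext; intros; ring. Qed.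

Lemma expect_sub N w d1 d2 : expect N w (fun k => d1 k - d2 k) = expect N w d1 - expect N w d2.
Proof. unfold expect. rewrite <- Rsum_sub. apply Rsum_ext; intros; ring. Qed.

Lemma expect_scal N w a d : expect N w (fun k => a * d k) = a * expect N w d.
Proof. unfold expect. rewrite <- !Rsum_scal. apply Rsum_ext; intros; ring. Qed.

Lemma expect_Rsum N w n f : expect N w (fun k => Rsum n (fun a => f a k)) = Rsum n (fun a => expect N w (f a)).
Proof. unfold expect. rewrite <- Rsum_swap. apply Rsum_ext; intros. rewrite <- Rsum_scal. auto. Qed.

Lemma expect_sign_quad N w c0 l q : expect N w (sign_quad N c0 l q) =
  c0 * expect N w (fun _ => 1) + Rsum N (fun j => l j * expect N w (sigma j)) +
  Rsum N (fun j => Rsum N (fun m => q j m * expect N w (fun k => sigma j k * sigma m k))).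
Proof.
  unfold sign_quad.
  rewrite (expect_ext N w _ (fun k => 1 * (c0 * 1 + 1 * Rsum N (fun j => l j * sigma j k)) +
      1 * Rsum N (fun j => Rsum N (fun m => q j m * (sigma j k * sigma m k))))) by (intros; ring).
  rewrite !expect_lin, !expect_Rsum. rewrite !Rmult_1_l.
  f_equal; [f_equal|]; apply Rsum_ext; intros.
  - apply expect_scal.
  - rewrite expect_Rsum. apply Rsum_ext; intros. apply expect_scal.
Qed.

Section ProductWeights.
Variable N : nat.
Variable W : nat -> bool -> R.

Lemma expect_prod_weight (M : nat -> bool -> R) :
  expect N (prod_weight N W) (prod_weight N M) = Rprod N (fun j => W j false * M j false + W j true * M j true).
Proof.
  unfold expect, dim, prod_weight. rewrite <- (Rsum_bits_Rprod N (fun j b => W j b * M j b)).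
  apply Rsum_ext; intros. rewrite Rprod_mul; auto.
Qed.

Lemma expect_prod_weight_one :
  expect N (prod_weight N W) (fun _ => 1) = Rprod N (fun j => W j false + W j true).
Proof.
  rewrite (expect_ext _ _ _ (prod_weight N (fun _ _ => 1))) by (intros; unfold prod_weight; rewrite Rprod_one; auto).
  rewrite expect_prod_weight. apply Rprod_ext; intros; ring.
Qed.

Lemma expect_prod_weight_sigma i : (i < N)%nat -> expect N (prod_weight N W) (sigma i) =
  Rprod N (fun j => if Nat.eqb j i then W j false - W j true else W j false + W j true).
Proof.
  intros Hi. rewrite (expect_ext _ _ _ _ (fun k _ => sigma_prod_weight N i k Hi)).
  rewrite expect_prod_weight. apply Rprod_ext; intros j Hj. unfold sgn. destruct (Nat.eqb j i); ring.
Qed.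

Lemma expect_prod_weight_sigma2 i l : (i < N)%nat -> (l < N)%nat -> i <> l ->
  expect N (prod_weight N W) (fun k => sigma i k * sigma l k) =
  Rprod N (fun j => if Nat.eqb j i then W j false - W j true
                    else if Nat.eqb j l then W j false - W j true else W j false + W j true).
Proof.
  intros Hi Hl Hil.
  rewrite (expect_ext _ _ _ (prod_weight N (fun j bit =>
             (if Nat.eqb j i then sgn bit else 1) * (if Nat.eqb j l then sgn bit else 1)))).
  - rewrite expect_prod_weight. apply Rprod_ext; intros j Hj.
    unfold sgn. destruct (Nat.eqb_spec j i), (Nat.eqb_spec j l); subst; try lia; ring.
  - intros k _. rewrite (sigma_prod_weight N i), (sigma_prod_weight N l) by auto.
    unfold prod_weight. rewrite <- Rprod_mul. auto.
Qed.

End ProductWeights.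

(** * The dephasing code *)

Definition pop (th : nat -> R) j (bit : bool) : R := if bit then sin (th j) ^ 2 else cos (th j) ^ 2.
Definition coh (th : nat -> R) j (bit : bool) : R :=
  if bit then - (cos (th j) * sin (th j)) else cos (th j) * sin (th j).

(* |<k|0_L>|^2, |<k|1_L>|^2 and (up to the phase i^N) <0_L|k><k|1_L> *)
Definition w0 N th := prod_weight N (pop th).
Definition w1 N th := prod_weight N (fun j bit => pop th j (negb bit)).
Definition w01 N th := prod_weight N (coh th).

Section CodeNorms.
Variables (N : nat) (th : nat -> R).

Lemma cos2_add_sin2 j : cos (th j) ^ 2 + sin (th j) ^ 2 = 1.
Proof. generalize (sin2_cos2 (th j)). unfold Rsqr. intros; simpl; lra. Qed.

Lemma expect_w0_one : expect N (w0 N th) (fun _ => 1) = 1.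
Proof.
  unfold w0. rewrite expect_prod_weight_one, <- (Rprod_one N).
  apply Rprod_ext; intros j _. unfold pop. generalize (cos2_add_sin2 j); lra.
Qed.

Lemma expect_w1_one : expect N (w1 N th) (fun _ => 1) = 1.
Proof.
  unfold w1. rewrite expect_prod_weight_one, <- (Rprod_one N).
  apply Rprod_ext; intros j _. unfold pop; simpl. generalize (cos2_add_sin2 j); lra.
Qed.

Lemma expect_w01_one : (1 <= N)%nat -> expect N (w01 N th) (fun _ => 1) = 0.
Proof.
  intros HN. unfold w01. rewrite expect_prod_weight_one.
  apply (Rprod_zero N _ 0%nat); auto. unfold coh; ring.
Qed.

End CodeNorms.

(* arccos(x)/2 is the angle whose qubit state |cos>|0> + i|sin>|1> has <Z> = cos (2 angle) = x. *)
Lemma cos2_sub_sin2_half_acos x : -1 <= x <= 1 -> cos (acos x / 2) ^ 2 - sin (acos x / 2) ^ 2 = x.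
Proof.
  intros Hx. transitivity (cos (2 * (acos x / 2))).
  - rewrite cos_2a. ring.
  - replace (2 * (acos x / 2)) with (acos x) by field. apply cos_acos; auto.
Qed.

Section CodeMoments.
Variables (N : nat) (th b : nat -> R).
Hypothesis cos2_sub_sin2 : forall j, (j < N)%nat -> cos (th j) ^ 2 - sin (th j) ^ 2 = b j.

Lemma expect_w0_sigma i : (i < N)%nat -> expect N (w0 N th) (sigma i) = b i.
Proof.
  intros Hi. unfold w0. rewrite expect_prod_weight_sigma, <- (Rprod_single N i (b i)) by auto.
  apply Rprod_ext; intros j Hj. unfold pop. destruct (Nat.eqb_spec j i); subst.
  - apply cos2_sub_sin2; auto.
  - generalize (cos2_add_sin2 th j); lra.
Qed.

Lemma expect_w1_sigma i : (i < N)%nat -> expect N (w1 N th) (sigma i) = - b i.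
Proof.
  intros Hi. unfold w1. rewrite expect_prod_weight_sigma, <- (Rprod_single N i (- b i)) by auto.
  apply Rprod_ext; intros j Hj. unfold pop; simpl. destruct (Nat.eqb_spec j i); subst.
  - generalize (cos2_sub_sin2 i Hj); lra.
  - generalize (cos2_add_sin2 th j); lra.
Qed.

Lemma expect_w0_sigma2 i l : (i < N)%nat -> (l < N)%nat -> i <> l ->
  expect N (w0 N th) (fun k => sigma i k * sigma l k) = b i * b l.
Proof.
  intros Hi Hl Hil. unfold w0. rewrite expect_prod_weight_sigma2, <- (Rprod_pair N i l (b i) (b l)) by auto.
  apply Rprod_ext; intros j Hj. unfold pop. destruct (Nat.eqb_spec j i); subst.
  - apply cos2_sub_sin2; auto.
  - destruct (Nat.eqb_spec j l); subst; [apply cos2_sub_sin2; auto|generalize (cos2_add_sin2 th j); lra].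
Qed.

Lemma expect_w1_sigma2 i l : (i < N)%nat -> (l < N)%nat -> i <> l ->
  expect N (w1 N th) (fun k => sigma i k * sigma l k) = b i * b l.
Proof.
  intros Hi Hl Hil. unfold w1. rewrite expect_prod_weight_sigma2 by auto.
  replace (b i * b l) with ((- b i) * (- b l)) by ring. rewrite <- (Rprod_pair N i l (- b i) (- b l)) by auto.
  apply Rprod_ext; intros j Hj. unfold pop; simpl. destruct (Nat.eqb_spec j i); subst.
  - generalize (cos2_sub_sin2 i Hj); lra.
  - destruct (Nat.eqb_spec j l); subst; [generalize (cos2_sub_sin2 l Hj)|generalize (cos2_add_sin2 th j)]; lra.
Qed.

(* The cross weight factorizes with a vanishing factor coh false + coh true = 0 on every qubit
   not carrying a sigma; a product of at most two sigmas leaves such a qubit exactly when N >= 3. *)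
Lemma expect_w01_sigma i : (2 <= N)%nat -> (i < N)%nat -> expect N (w01 N th) (sigma i) = 0.
Proof.
  intros HN Hi. unfold w01. rewrite expect_prod_weight_sigma by auto.
  destruct (Nat.eq_dec i 0) as [->|Hi0].
  - apply (Rprod_zero N _ 1%nat); [lia|]. simpl. unfold coh; ring.
  - apply (Rprod_zero N _ 0%nat); [lia|]. destruct (Nat.eqb_spec 0 i); [lia|]. unfold coh; ring.
Qed.

Lemma expect_w01_sigma2 i l : (3 <= N)%nat -> (i < N)%nat -> (l < N)%nat ->
  expect N (w01 N th) (fun k => sigma i k * sigma l k) = 0.
Proof.
  intros HN Hi Hl. destruct (Nat.eq_dec i l) as [->|Hil].
  - rewrite (expect_ext _ _ _ (fun _ => 1)) by (intros; apply sigma_sq). apply expect_w01_one; lia.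
  - unfold w01. rewrite expect_prod_weight_sigma2 by auto.
    assert (exists j, (j < N)%nat /\ j <> i /\ j <> l) as [j [Hj [Hji Hjl]]].
    { destruct (Nat.eq_dec i 0), (Nat.eq_dec l 0), (Nat.eq_dec i 1), (Nat.eq_dec l 1);
        first [exists 0%nat; split; lia | exists 1%nat; split; lia | exists 2%nat; split; lia]. }
    apply (Rprod_zero N _ j); auto.
    destruct (Nat.eqb_spec j i); [lia|]. destruct (Nat.eqb_spec j l); [lia|]. unfold coh; ring.
Qed.

Lemma expect_w01_sign_quad c0 l q : (3 <= N)%nat -> expect N (w01 N th) (sign_quad N c0 l q) = 0.
Proof.
  intros HN. rewrite expect_sign_quad, expect_w01_one by lia.
  rewrite (Rsum_zero N (fun j => l j * _)), (Rsum_zero N (fun j => Rsum N _)); [ring| |].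
  - intros j Hj. apply Rsum_zero. intros m Hm. rewrite expect_w01_sigma2 by auto. ring.
  - intros j Hj. rewrite expect_w01_sigma by (auto; lia). ring.
Qed.

Lemma expect_w0_w1_sigma2 i l : (i < N)%nat -> (l < N)%nat ->
  expect N (w0 N th) (fun k => sigma i k * sigma l k) = expect N (w1 N th) (fun k => sigma i k * sigma l k).
Proof.
  intros Hi Hl. destruct (Nat.eq_dec i l) as [->|Hil].
  - rewrite (expect_ext N (w0 N th) _ (fun _ => 1)), (expect_ext N (w1 N th) _ (fun _ => 1))
      by (intros; apply sigma_sq).
    rewrite expect_w0_one, expect_w1_one; auto.
  - rewrite expect_w0_sigma2, expect_w1_sigma2; auto.
Qed.

(* In w0 - w1 only the linear part survives: constants and products of two sigmas have equal means. *)
Lemma expect_w0_sub_w1_sign_quad c0 l q :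
  expect N (w0 N th) (sign_quad N c0 l q) - expect N (w1 N th) (sign_quad N c0 l q) = 2 * rdot N l b.
Proof.
  rewrite !expect_sign_quad, expect_w0_one, expect_w1_one.
  rewrite (Rsum_ext N (fun j => Rsum N (fun m => q j m * expect N (w0 N th) _))
                      (fun j => Rsum N (fun m => q j m * expect N (w1 N th) (fun k => sigma j k * sigma m k))))
    by (intros; apply Rsum_ext; intros; rewrite expect_w0_w1_sigma2; auto).
  rewrite (Rsum_ext N (fun j => l j * expect N (w0 N th) (sigma j)) (fun j => l j * b j))
    by (intros; rewrite expect_w0_sigma; auto).
  rewrite (Rsum_ext N (fun j => l j * expect N (w1 N th) (sigma j)) (fun j => (-1) * (l j * b j)))
    by (intros; rewrite expect_w1_sigma; auto; ring).
  rewrite Rsum_scal. unfold rdot. ring.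
Qed.

End CodeMoments.

Definition amp (th : nat -> R) j (bit : bool) : C :=
  if bit then Cmul Ci (RtoC (sin (th j))) else RtoC (cos (th j)).
Definition phase (N : nat) : C := Cprodn N (fun _ => Ci).

Lemma zeroL_prod N th k : zeroL N th k = Cprodn N (fun j => amp th j (Nat.testbit k j)).
Proof. reflexivity. Qed.

Lemma oneL_prod N th k : (k < dim N)%nat ->
  oneL N th k = Cprodn N (fun j => amp th j (negb (Nat.testbit k j))).
Proof.
  intros Hk. unfold oneL, opApply. rewrite (Csum_single (dim N) (dim N - 1 - k)).
  - unfold Xall. rewrite Nat.eqb_refl, zeroL_prod.
    transitivity (Cprodn N (fun j => amp th j (Nat.testbit (dim N - 1 - k) j))); [ring|].
    apply Cprodn_ext. intros j Hj. unfold dim in *. rewrite bit_complement; auto.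
  - lia.
  - intros i Hi Hne. unfold Xall. destruct (Nat.eqb_spec i (dim N - 1 - k)); [lia|]. ring.
Qed.

Lemma Cnorm2_amp th j bit : Cnorm2 (amp th j bit) = pop th j bit.
Proof. unfold amp, pop. destruct bit; unfold Cnorm2, Cmul, Ci, RtoC; simpl; ring. Qed.

Lemma amp_cross th j bit : Cmul (Cconj (amp th j bit)) (amp th j (negb bit)) = Cmul Ci (RtoC (coh th j bit)).
Proof. unfold amp, coh. destruct bit; simpl; Csolve. Qed.

Section CodeVectors.
Variables (N : nat) (th : nat -> R).
Local Notation z := (zeroL N th).
Local Notation o := (oneL N th).

Lemma Cnorm2_zeroL k : Cnorm2 (z k) = w0 N th k.
Proof. rewrite zeroL_prod, Cnorm2_prod. apply Rprod_ext; intros; apply Cnorm2_amp. Qed.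

Lemma Cnorm2_oneL k : (k < dim N)%nat -> Cnorm2 (o k) = w1 N th k.
Proof. intros Hk. rewrite oneL_prod, Cnorm2_prod by auto. apply Rprod_ext; intros; apply Cnorm2_amp. Qed.

Lemma conj_zeroL_oneL k : (k < dim N)%nat -> Cmul (Cconj (z k)) (o k) = Cmul (phase N) (RtoC (w01 N th k)).
Proof.
  intros Hk. rewrite oneL_prod, zeroL_prod by auto. rewrite Cprodn_conj, <- Cprodn_mul.
  rewrite (Cprodn_ext N _ (fun j => Cmul Ci (RtoC (coh th j (Nat.testbit k j))))) by (intros; apply amp_cross).
  rewrite Cprodn_mul, Cprodn_RtoC. reflexivity.
Qed.

Lemma conj_oneL_zeroL k : (k < dim N)%nat ->
  Cmul (Cconj (o k)) (z k) = Cmul (Cconj (phase N)) (RtoC (w01 N th k)).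
Proof.
  intros Hk. transitivity (Cconj (Cmul (Cconj (z k)) (o k))); [Csolve|].
  rewrite conj_zeroL_oneL, Cconj_mul, Cconj_RtoC by auto. auto.
Qed.

Lemma Csum_zeroL_zeroL d :
  Csum (dim N) (fun m => Cmul (RtoC (d m)) (Cmul (Cconj (z m)) (z m))) = RtoC (expect N (w0 N th) d).
Proof.
  unfold expect. rewrite <- Csum_RtoC. apply Csum_ext; intros.
  rewrite Cmul_conj_self, Cnorm2_zeroL, RtoC_mul. ring.
Qed.

Lemma Csum_oneL_oneL d :
  Csum (dim N) (fun m => Cmul (RtoC (d m)) (Cmul (Cconj (o m)) (o m))) = RtoC (expect N (w1 N th) d).
Proof.
  unfold expect. rewrite <- Csum_RtoC. apply Csum_ext; intros.
  rewrite Cmul_conj_self, Cnorm2_oneL, RtoC_mul by auto. ring.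
Qed.

Lemma Csum_zeroL_oneL d : Csum (dim N) (fun m => Cmul (RtoC (d m)) (Cmul (Cconj (z m)) (o m))) =
  Cmul (phase N) (RtoC (expect N (w01 N th) d)).
Proof.
  unfold expect. rewrite <- Csum_RtoC, <- Csum_scal. apply Csum_ext; intros.
  rewrite conj_zeroL_oneL, RtoC_mul by auto. ring.
Qed.

Lemma Csum_oneL_zeroL d : Csum (dim N) (fun m => Cmul (RtoC (d m)) (Cmul (Cconj (o m)) (z m))) =
  Cmul (Cconj (phase N)) (RtoC (expect N (w01 N th) d)).
Proof.
  unfold expect. rewrite <- Csum_RtoC, <- Csum_scal. apply Csum_ext; intros.
  rewrite conj_oneL_zeroL, RtoC_mul by auto. ring.
Qed.

End CodeVectors.

Definition DiagR N (A : Op) (d : nat -> R) := forall i k, (i < dim N)%nat -> (k < dim N)%nat ->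
  A i k = if Nat.eqb i k then RtoC (d i) else C0.

Definition dZ N (v : nat -> R) (k : nat) : R := Rsum N (fun j => v j * sigma j k).

Lemma DiagR_ext N A d d' : (forall k, d k = d' k) -> DiagR N A d -> DiagR N A d'.
Proof. intros E H i k Hi Hk. rewrite H, E by auto. auto. Qed.

Lemma if_RtoC_mul (e : bool) c x : Cmul (RtoC c) (if e then RtoC x else C0) = if e then RtoC (c * x) else C0.
Proof. destruct e; [rewrite RtoC_mul|]; ring. Qed.

Lemma Csum_if n (e : bool) f : Csum n (fun a => if e then RtoC (f a) else C0) = if e then RtoC (Rsum n f) else C0.
Proof. destruct e. apply Csum_RtoC. apply Csum_zero; auto. Qed.

Lemma diag_dotZ N v : DiagR N (dotZ N v) (dZ N v).
Proof.
  intros i k Hi Hk. unfold dotZ, PauliZ, dZ.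
  rewrite (Csum_ext N _ (fun j => if Nat.eqb i k then RtoC (v j * sigma j i) else C0)); [apply Csum_if|].
  intros j Hj. destruct (Nat.eqb i k); [|ring]. unfold sigma, sgn.
  destruct (Nat.testbit i j); rewrite RtoC_mul; [ring|]. rewrite RtoC_1; ring.
Qed.

Lemma diag_scale N c A d : DiagR N A d -> DiagR N (opScale (RtoC c) A) (fun k => c * d k).
Proof. intros H i k Hi Hk. unfold opScale. rewrite H by auto. apply if_RtoC_mul. Qed.

Lemma diag_sub N A B dA dB : DiagR N A dA -> DiagR N B dB -> DiagR N (opSub A B) (fun k => dA k - dB k).
Proof.
  intros HA HB i k Hi Hk. unfold opSub. rewrite HA, HB by auto.
  destruct (Nat.eqb i k); [rewrite RtoC_sub|]; ring.
Qed.

Lemma diag_mul N A B dA dB : DiagR N A dA -> DiagR N B dB -> DiagR N (opMul N A B) (fun k => dA k * dB k).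
Proof.
  intros HA HB i k Hi Hk. unfold opMul. rewrite (Csum_single (dim N) i); auto.
  - rewrite HA, HB, Nat.eqb_refl by auto. destruct (Nat.eqb_spec i k); [subst; rewrite RtoC_mul|]; ring.
  - intros m Hm Hne. rewrite HA by auto. destruct (Nat.eqb_spec i m); [lia|ring].
Qed.

Lemma diag_id N : DiagR N opId (fun _ => 1).
Proof. intros i k _ _. unfold opId. destruct (Nat.eqb i k); [rewrite RtoC_1|]; auto. Qed.

Lemma diag_Hmain N h : DiagR N (Hmain N h) (fun k => 1 / 2 * dZ N h k).
Proof. apply diag_scale, diag_dotZ. Qed.

Lemma diag_Lind N lam vv a : DiagR N (Lind N lam vv a) (fun k => sqrt (lam a) * dZ N (vv a) k).
Proof. apply diag_scale, diag_dotZ. Qed.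

Lemma opApply_diag N A d v k : DiagR N A d -> (k < dim N)%nat -> opApply N A v k = Cmul (RtoC (d k)) (v k).
Proof.
  intros H Hk. unfold opApply. rewrite (Csum_single (dim N) k); auto.
  - rewrite H, Nat.eqb_refl by auto. auto.
  - intros m Hm Hne. rewrite H by auto. destruct (Nat.eqb_spec k m); [lia|ring].
Qed.

Lemma braket_diag N A d u v : DiagR N A d ->
  braket N u A v = Csum (dim N) (fun k => Cmul (RtoC (d k)) (Cmul (Cconj (u k)) (v k))).
Proof. intros H. unfold braket, inner. apply Csum_ext; intros. rewrite (opApply_diag N A d) by auto. ring. Qed.

Definition span_lin N (lam : nat -> R) (vv : nat -> nat -> R) (c1 : nat -> R) (j : nat) : R :=
  Rsum N (fun a => c1 a * sqrt (lam a) * vv a j).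
Definition span_quad N (lam : nat -> R) (vv : nat -> nat -> R) (c2 : nat -> nat -> R) (j m : nat) : R :=
  Rsum N (fun a => Rsum N (fun b => c2 a b * sqrt (lam a) * sqrt (lam b) * (vv a j * vv b m))).

Lemma dZ_sign_quad N v k : dZ N v k = sign_quad N 0 v (fun _ _ => 0) k.
Proof.
  unfold sign_quad, dZ. rewrite (Rsum_zero N (fun j => Rsum N _)); [ring|].
  intros; apply Rsum_zero; intros; ring.
Qed.

Lemma Rsum_lin_swap N (c : nat -> R) (u : nat -> nat -> R) (s : nat -> R) :
  Rsum N (fun a => c a * Rsum N (fun j => u a j * s j)) = Rsum N (fun j => Rsum N (fun a => c a * u a j) * s j).
Proof.
  rewrite (Rsum_ext N (fun a => c a * _) (fun a => Rsum N (fun j => c a * u a j * s j)))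
    by (intros; rewrite <- Rsum_scal; apply Rsum_ext; intros; ring).
  rewrite Rsum_swap. apply Rsum_ext; intros j _.
  rewrite Rmult_comm, <- Rsum_scal. apply Rsum_ext; intros; ring.
Qed.

Lemma span_diag_sign_quad N lam vv c0 c1 c2 k :
  c0 * 1 + Rsum N (fun a => c1 a * (sqrt (lam a) * dZ N (vv a) k)) +
  Rsum N (fun a => Rsum N (fun b => c2 a b * (sqrt (lam a) * dZ N (vv a) k * (sqrt (lam b) * dZ N (vv b) k)))) =
  sign_quad N c0 (span_lin N lam vv c1) (span_quad N lam vv c2) k.
Proof.
  unfold sign_quad, span_lin, span_quad, dZ. f_equal; [f_equal; [ring|]|].
  - rewrite <- Rsum_lin_swap. apply Rsum_ext; intros. ring.
  - rewrite (Rsum_ext N _ (fun a => Rsum N (fun j => Rsum N (fun b => Rsum N (fun m =>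
               c2 a b * sqrt (lam a) * sqrt (lam b) * (vv a j * vv b m) * (sigma j k * sigma m k)))))).
    + rewrite Rsum_swap. apply Rsum_ext; intros j _.
      rewrite (Rsum_ext N _ (fun a => Rsum N (fun m => Rsum N (fun b =>
                 c2 a b * sqrt (lam a) * sqrt (lam b) * (vv a j * vv b m) * (sigma j k * sigma m k)))))
        by (intros; apply Rsum_swap).
      rewrite Rsum_swap. apply Rsum_ext; intros m _.
      rewrite (Rmult_comm (Rsum N _)), <- Rsum_scal. apply Rsum_ext; intros a _.
      rewrite <- Rsum_scal. apply Rsum_ext; intros; ring.
    + intros a _. rewrite Rsum_swap. apply Rsum_ext; intros b _.
      transitivity (c2 a b * sqrt (lam a) * sqrt (lam b) *
        (Rsum N (fun j => vv a j * sigma j k) * Rsum N (fun m => vv b m * sigma m k))); [ring|].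
      rewrite Rsum_mul_Rsum, <- Rsum_scal. apply Rsum_ext; intros j _.
      rewrite <- Rsum_scal. apply Rsum_ext; intros; ring.
Qed.

Lemma diag_spanElt N lam vv c0 c1 c2 :
  DiagR N (spanElt N lam vv c0 c1 c2) (sign_quad N c0 (span_lin N lam vv c1) (span_quad N lam vv c2)).
Proof.
  eapply DiagR_ext; [intros k; apply span_diag_sign_quad|].
  intros i k Hi Hk. unfold spanElt. rewrite (diag_id N i k) by auto.
  rewrite (Csum_ext N (fun a => Cmul (RtoC (c1 a)) (Lind N lam vv a i k))
             (fun a => if Nat.eqb i k then RtoC (c1 a * (sqrt (lam a) * dZ N (vv a) i)) else C0))
    by (intros; rewrite diag_Lind by auto; apply if_RtoC_mul).
  rewrite (Csum_ext N
     (fun a => Csum N (fun b => Cmul (RtoC (c2 a b)) (opMul N (Lind N lam vv a) (Lind N lam vv b) i k)))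
     (fun a => if Nat.eqb i k then RtoC (Rsum N (fun b => c2 a b *
                 (sqrt (lam a) * dZ N (vv a) i * (sqrt (lam b) * dZ N (vv b) i)))) else C0)).
  2:{ intros a Ha. rewrite <- Csum_if. apply Csum_ext. intros b' Hb'.
      rewrite (diag_mul N _ _ _ _ (diag_Lind N lam vv a) (diag_Lind N lam vv b')) by auto.
      apply if_RtoC_mul. }
  rewrite !Csum_if. destruct (Nat.eqb i k); [rewrite !RtoC_add, RtoC_mul|]; ring.
Qed.

Lemma rdot_span_lin N lam vv c1 b :
  rdot N (span_lin N lam vv c1) b = Rsum N (fun a => c1 a * (sqrt (lam a) * rdot N (vv a) b)).
Proof.
  unfold rdot at 1, span_lin. rewrite <- (Rsum_lin_swap N (fun a => c1 a * sqrt (lam a)) vv b).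
  apply Rsum_ext; intros. unfold rdot. ring.
Qed.

Lemma expect_Hmain_diag N w h :
  expect N w (fun k => 1 / 2 * dZ N h k) = 1 / 2 * expect N w (sign_quad N 0 h (fun _ _ => 0)).
Proof. rewrite expect_scal. f_equal. apply expect_ext; intros; apply dZ_sign_quad. Qed.

Definition code_op N th (al be : C) : Op := fun i k =>
  Cadd (Cmul al (Cmul (zeroL N th i) (Cconj (zeroL N th k)))) (Cmul be (Cmul (oneL N th i) (Cconj (oneL N th k)))).

Lemma projP_code_op N th i k : projP N th i k = code_op N th C1 C1 i k.
Proof. unfold projP, code_op. ring. Qed.

Lemma sandwich_diag N th D d i k : DiagR N D d -> expect N (w01 N th) d = 0 ->
  (i < dim N)%nat -> (k < dim N)%nat ->
  opMul N (opMul N (projP N th) D) (projP N th) i k =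
  code_op N th (RtoC (expect N (w0 N th) d)) (RtoC (expect N (w1 N th) d)) i k.
Proof.
  intros HD H01 Hi Hk. unfold opMul at 1.
  set (z := zeroL N th). set (o := oneL N th).
  rewrite (Csum_ext (dim N) _ (fun m =>
    Cadd (Cadd (Cmul (Cmul (z i) (Cconj (z k))) (Cmul (RtoC (d m)) (Cmul (Cconj (z m)) (z m))))
               (Cmul (Cmul (z i) (Cconj (o k))) (Cmul (RtoC (d m)) (Cmul (Cconj (z m)) (o m)))))
         (Cadd (Cmul (Cmul (o i) (Cconj (z k))) (Cmul (RtoC (d m)) (Cmul (Cconj (o m)) (z m))))
               (Cmul (Cmul (o i) (Cconj (o k))) (Cmul (RtoC (d m)) (Cmul (Cconj (o m)) (o m))))))).
  2:{ intros m Hm. unfold opMul. rewrite (Csum_single (dim N) m); auto.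
      - rewrite HD, Nat.eqb_refl by auto. unfold projP. fold z o. ring.
      - intros n Hn Hne. rewrite HD by auto. destruct (Nat.eqb_spec n m); [lia|ring]. }
  rewrite !Csum_add, !Csum_scal. unfold z, o.
  rewrite Csum_zeroL_zeroL, Csum_zeroL_oneL, Csum_oneL_zeroL, Csum_oneL_oneL, H01, RtoC_0.
  unfold code_op. ring.
Qed.

Section OrthonormalCode.
Variables (N : nat) (th : nat -> R).
Hypothesis N_pos : (1 <= N)%nat.
Local Notation z := (zeroL N th).
Local Notation o := (oneL N th).

Lemma inner_zeroL_zeroL : Csum (dim N) (fun m => Cmul (Cconj (z m)) (z m)) = C1.
Proof.
  rewrite <- RtoC_1, <- (expect_w0_one N th), <- Csum_zeroL_zeroL by auto.
  apply Csum_ext; intros. rewrite RtoC_1; ring.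
Qed.

Lemma inner_oneL_oneL : Csum (dim N) (fun m => Cmul (Cconj (o m)) (o m)) = C1.
Proof.
  rewrite <- RtoC_1, <- (expect_w1_one N th), <- Csum_oneL_oneL by auto.
  apply Csum_ext; intros. rewrite RtoC_1; ring.
Qed.

Lemma inner_zeroL_oneL : Csum (dim N) (fun m => Cmul (Cconj (z m)) (o m)) = C0.
Proof.
  transitivity (Cmul (phase N) (RtoC (expect N (w01 N th) (fun _ => 1)))).
  - rewrite <- Csum_zeroL_oneL. apply Csum_ext; intros. rewrite RtoC_1; ring.
  - rewrite expect_w01_one, RtoC_0 by auto. ring.
Qed.

Lemma inner_oneL_zeroL : Csum (dim N) (fun m => Cmul (Cconj (o m)) (z m)) = C0.
Proof.
  transitivity (Cmul (Cconj (phase N)) (RtoC (expect N (w01 N th) (fun _ => 1)))).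
  - rewrite <- Csum_oneL_zeroL. apply Csum_ext; intros. rewrite RtoC_1; ring.
  - rewrite expect_w01_one, RtoC_0 by auto. ring.
Qed.

Lemma code_op_sq K al be i k :
  (forall i k, (i < dim N)%nat -> (k < dim N)%nat -> K i k = code_op N th al be i k) ->
  (i < dim N)%nat -> (k < dim N)%nat -> opMul N K K i k = code_op N th (Cmul al al) (Cmul be be) i k.
Proof.
  intros HK Hi Hk. unfold opMul.
  rewrite (Csum_ext (dim N) _ (fun m =>
    Cadd (Cadd (Cmul (Cmul (Cmul al al) (Cmul (z i) (Cconj (z k)))) (Cmul (Cconj (z m)) (z m)))
               (Cmul (Cmul (Cmul al be) (Cmul (z i) (Cconj (o k)))) (Cmul (Cconj (z m)) (o m))))
         (Cadd (Cmul (Cmul (Cmul be al) (Cmul (o i) (Cconj (z k)))) (Cmul (Cconj (o m)) (z m)))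
               (Cmul (Cmul (Cmul be be) (Cmul (o i) (Cconj (o k)))) (Cmul (Cconj (o m)) (o m)))))).
  2:{ intros m Hm. rewrite !HK by auto. unfold code_op. ring. }
  rewrite !Csum_add, !Csum_scal, inner_zeroL_zeroL, inner_oneL_oneL, inner_zeroL_oneL, inner_oneL_zeroL.
  unfold code_op. ring.
Qed.

Lemma inv_sqrt2_sq : Cmul (RtoC (1 / sqrt 2)) (RtoC (1 / sqrt 2)) = RtoC (1 / 2).
Proof.
  rewrite <- RtoC_mul. f_equal. assert (H := sqrt_sqrt 2 ltac:(lra)).
  assert (0 < sqrt 2) by (apply sqrt_lt_R0; lra).
  replace (1 / sqrt 2 * (1 / sqrt 2)) with (1 / (sqrt 2 * sqrt 2)) by (field; lra). rewrite H. auto.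
Qed.

Lemma braket_plusL_code_op K al be :
  (forall i k, (i < dim N)%nat -> (k < dim N)%nat -> K i k = code_op N th al be i k) ->
  braket N (plusL N th) K (plusL N th) = Cmul (RtoC (1 / 2)) (Cadd al be).
Proof.
  intros HK. set (s2 := RtoC (1 / sqrt 2)). unfold braket, inner, opApply.
  rewrite (Csum_ext (dim N) _ (fun i => Cmul (Cconj (plusL N th i))
     (Cadd (Cmul (Cmul al (z i)) (Cmul s2 (Cadd (Csum (dim N) (fun m => Cmul (Cconj (z m)) (z m)))
                                                (Csum (dim N) (fun m => Cmul (Cconj (z m)) (o m))))))
           (Cmul (Cmul be (o i)) (Cmul s2 (Cadd (Csum (dim N) (fun m => Cmul (Cconj (o m)) (z m)))
                                                (Csum (dim N) (fun m => Cmul (Cconj (o m)) (o m))))))))).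
  2:{ intros i Hi. f_equal. rewrite <- !Csum_add, <- !Csum_scal, <- Csum_add. apply Csum_ext. intros m Hm.
      rewrite HK by auto. unfold code_op, plusL. fold s2. ring. }
  rewrite inner_zeroL_zeroL, inner_oneL_oneL, inner_zeroL_oneL, inner_oneL_zeroL.
  rewrite (Csum_ext (dim N) _ (fun i =>
    Cadd (Cmul (Cmul (Cmul al s2) s2) (Cadd (Cmul (Cconj (z i)) (z i)) (Cmul (Cconj (o i)) (z i))))
         (Cmul (Cmul (Cmul be s2) s2) (Cadd (Cmul (Cconj (z i)) (o i)) (Cmul (Cconj (o i)) (o i)))))).
  2:{ intros i Hi. unfold plusL. fold s2. rewrite Cconj_mul, Cconj_add.
      unfold s2 at 1. rewrite Cconj_RtoC. fold s2. ring. }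
  rewrite Csum_add, !Csum_scal, !Csum_add, inner_zeroL_zeroL, inner_oneL_oneL, inner_zeroL_oneL, inner_oneL_zeroL.
  transitivity (Cmul (Cmul s2 s2) (Cadd al be)); [ring|]. unfold s2. rewrite inv_sqrt2_sq. auto.
Qed.

End OrthonormalCode.

Section CodeProperties.
Variable N : nat.
Hypothesis N_ge3 : (3 <= N)%nat.
Variables (th b : nat -> R).
Hypothesis cos2_sub_sin2 : forall j, (j < N)%nat -> cos (th j) ^ 2 - sin (th j) ^ 2 = b j.

Lemma code_knill_laflamme lam vv c0 c1 c2 :
  (forall a, (a < N)%nat -> sqrt (lam a) * rdot N (vv a) b = 0) ->
  exists c : R, forall i k, (i < dim N)%nat -> (k < dim N)%nat ->
    opMul N (opMul N (projP N th) (spanElt N lam vv c0 c1 c2)) (projP N th) i k =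
    Cmul (RtoC c) (projP N th i k).
Proof.
  intros Horth. set (d := sign_quad N c0 (span_lin N lam vv c1) (span_quad N lam vv c2)).
  exists (expect N (w0 N th) d). intros i k Hi Hk.
  rewrite (sandwich_diag N th _ d); auto; [|apply diag_spanElt|apply expect_w01_sign_quad; auto].
  assert (E : expect N (w0 N th) d = expect N (w1 N th) d).
  { assert (D := expect_w0_sub_w1_sign_quad N th b cos2_sub_sin2 c0 (span_lin N lam vv c1) (span_quad N lam vv c2)).
    rewrite rdot_span_lin, Rsum_zero in D; [fold d in D; lra|].
    intros a Ha. rewrite Horth by auto. ring. }
  rewrite <- E, projP_code_op. unfold code_op. ring.
Qed.

Lemma code_H_offdiag h : braket N (zeroL N th) (Hmain N h) (oneL N th) = C0.
Proof.
  rewrite (braket_diag N _ _ _ _ (diag_Hmain N h)), Csum_zeroL_oneL, expect_Hmain_diag.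
  rewrite expect_w01_sign_quad by auto. rewrite Rmult_0_r, RtoC_0. ring.
Qed.

Lemma code_H_gap h : Csub (braket N (zeroL N th) (Hmain N h) (zeroL N th))
                          (braket N (oneL N th) (Hmain N h) (oneL N th)) = RtoC (rdot N h b).
Proof.
  rewrite !(braket_diag N _ _ _ _ (diag_Hmain N h)), Csum_zeroL_zeroL, Csum_oneL_oneL, <- RtoC_sub.
  rewrite !expect_Hmain_diag, <- Rmult_minus_distr_l, (expect_w0_sub_w1_sign_quad N th b) by auto.
  f_equal. field.
Qed.

(* P H P = x0 |0_L><0_L| + x1 |1_L><1_L| with x0 - x1 = h . b, so |+_L> sees the variance of a
   two-level Hamiltonian with gap h . b. *)
Lemma code_QFI h t : QFI N t (opMul N (opMul N (projP N th) (Hmain N h)) (projP N th)) (plusL N th) =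
  RtoC (t ^ 2 * rdot N h b ^ 2).
Proof.
  set (dH := fun k => 1 / 2 * dZ N h k).
  set (x0 := expect N (w0 N th) dH). set (x1 := expect N (w1 N th) dH).
  set (K := opMul N (opMul N (projP N th) (Hmain N h)) (projP N th)).
  assert (HK : forall i k, (i < dim N)%nat -> (k < dim N)%nat -> K i k = code_op N th (RtoC x0) (RtoC x1) i k).
  { intros i k Hi Hk. apply sandwich_diag; auto using diag_Hmain.
    unfold dH. rewrite expect_Hmain_diag, expect_w01_sign_quad by auto. ring. }
  assert (HKK : forall i k, (i < dim N)%nat -> (k < dim N)%nat ->
            opMul N K K i k = code_op N th (Cmul (RtoC x0) (RtoC x0)) (Cmul (RtoC x1) (RtoC x1)) i k).
  { intros i k Hi Hk. apply code_op_sq; auto; lia. }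
  assert (E : x0 - x1 = rdot N h b).
  { unfold x0, x1, dH. rewrite !expect_Hmain_diag, <- Rmult_minus_distr_l, (expect_w0_sub_w1_sign_quad N th b) by auto.
    field. }
  unfold QFI. rewrite (braket_plusL_code_op N _ ltac:(lia) _ _ _ HKK),
                      (braket_plusL_code_op N _ ltac:(lia) _ _ _ HK).
  rewrite <- E. unfold RtoC, Cmul, Csub, Cadd, Copp; simpl. apply Ceq; simpl; field.
Qed.

End CodeProperties.

(** * Operator norms of diagonal operators *)

Lemma vnorm_apply_diag N A d psi : DiagR N A d ->
  vnorm N (opApply N A psi) = sqrt (Rsum (dim N) (fun k => d k * d k * Cnorm2 (psi k))).
Proof.
  intros H. unfold vnorm. f_equal. apply Rsum_ext. intros.
  rewrite (opApply_diag N A d), Cnorm2_mul, Cnorm2_RtoC by auto. auto.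
Qed.

(* ||A psi||^2 = <d^2> >= <d>^2 for a unit vector psi *)
Lemma OpNorm_diag_ge_mean N A d y psi : DiagR N A d -> OpNorm N A y ->
  Rsum (dim N) (fun k => Cnorm2 (psi k)) = 1 ->
  Rabs (Rsum (dim N) (fun k => Cnorm2 (psi k) * d k)) <= y.
Proof.
  intros HD [Hub _] Hp.
  assert (Hv : vnorm N psi = 1) by (unfold vnorm; rewrite Hp; apply sqrt_1).
  assert (Hy := Hub _ (ex_intro _ psi (conj Hv eq_refl))).
  rewrite (vnorm_apply_diag N A d) in Hy by auto.
  set (m := Rsum (dim N) (fun k => Cnorm2 (psi k) * d k)) in *.
  assert (Hvar : 0 <= Rsum (dim N) (fun k => Cnorm2 (psi k) * ((d k - m) * (d k - m)))).
  { apply Rsum_nonneg; intros. apply Rmult_le_pos; [apply Cnorm2_nonneg|apply Rle_0_sqr]. }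
  assert (E : Rsum (dim N) (fun k => Cnorm2 (psi k) * ((d k - m) * (d k - m))) =
     Rsum (dim N) (fun k => d k * d k * Cnorm2 (psi k)) - 2 * m * m + m * m * Rsum (dim N) (fun k => Cnorm2 (psi k))).
  { rewrite (Rsum_ext _ _ (fun k => (d k * d k * Cnorm2 (psi k) + (-2 * m) * (Cnorm2 (psi k) * d k))
                                   + (m * m) * Cnorm2 (psi k)))
      by (intros; ring).
    rewrite !Rsum_add, !Rsum_scal. unfold m. ring. }
  rewrite Hp in E. eapply Rle_trans; [|exact Hy].
  rewrite <- sqrt_Rsqr_abs. apply sqrt_le_1_alt. unfold Rsqr. lra.
Qed.

Lemma Rsum_basis_vector N k0 (f : C -> R) : (k0 < dim N)%nat -> f C0 = 0 ->
  Rsum (dim N) (fun k => f (if Nat.eqb k k0 then C1 else C0)) = f C1.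
Proof.
  intros Hk0 Hf. rewrite (Rsum_single (dim N) k0); auto.
  - rewrite Nat.eqb_refl. auto.
  - intros i Hi Hne. destruct (Nat.eqb_spec i k0); [lia|auto].
Qed.

Lemma OpNorm_diag N A d k0 : DiagR N A d -> (k0 < dim N)%nat ->
  (forall k, (k < dim N)%nat -> Rabs (d k) <= Rabs (d k0)) -> OpNorm N A (Rabs (d k0)).
Proof.
  intros HD Hk0 Hmax. split.
  - intros y [psi [Hv ->]]. rewrite (vnorm_apply_diag N A d) by auto.
    assert (Hp : Rsum (dim N) (fun k => Cnorm2 (psi k)) = 1).
    { unfold vnorm in Hv. rewrite <- sqrt_1 in Hv. apply sqrt_inj in Hv; auto; [|lra].
      apply Rsum_nonneg; intros; apply Cnorm2_nonneg. }
    rewrite <- (sqrt_Rsqr (Rabs (d k0))) by apply Rabs_pos. apply sqrt_le_1_alt.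
    replace (Rabs (d k0))² with (Rabs (d k0) * Rabs (d k0) * 1) by (unfold Rsqr; ring).
    rewrite <- Hp, <- Rsum_scal. apply Rsum_le. intros k Hk.
    apply Rmult_le_compat_r; [apply Cnorm2_nonneg|].
    specialize (Hmax k Hk).
    assert (E : Rabs (d k) * Rabs (d k) = d k * d k) by (rewrite <- Rabs_mult; apply Rabs_right; nra).
    generalize (Rabs_pos (d k)). nra.
  - intros y Hub. apply Hub. exists (fun k => if Nat.eqb k k0 then C1 else C0). split.
    + unfold vnorm. cbv beta. rewrite (Rsum_basis_vector N k0 Cnorm2) by (auto; unfold Cnorm2, C0; simpl; ring).
      unfold Cnorm2, C1; simpl. replace (1 * (1 * 1) + 0 * (0 * 1)) with 1 by ring. apply sqrt_1.
    + rewrite (vnorm_apply_diag N A d) by auto.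
      rewrite (Rsum_ext _ _ (fun k => (fun c => d k0 * d k0 * Cnorm2 c) (if Nat.eqb k k0 then C1 else C0))).
      2:{ intros k Hk. destruct (Nat.eqb_spec k k0); subst; auto. unfold Cnorm2, C0; simpl; ring. }
      rewrite (Rsum_basis_vector N k0 (fun c => d k0 * d k0 * Cnorm2 c)) by (auto; unfold Cnorm2, C0; simpl; ring).
      unfold Cnorm2, C1; simpl. rewrite <- sqrt_Rsqr_abs. f_equal. unfold Rsqr. ring.
Qed.

(* ||(1/2) e . Z|| = ||e||_1 / 2: the diagonal attains its maximum at the basis vector whose
   bits are the signs of e. *)
Lemma OpNorm_half_dZ N A e : DiagR N A (fun k => 1 / 2 * dZ N e k) -> OpNorm N A (l1norm N e / 2).
Proof.
  intros HD.
  destruct (bit_pattern N (fun j => if Rlt_dec (e j) 0 then true else false)) as [k0 [Hk0 Hbits]].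
  assert (Hval : 1 / 2 * dZ N e k0 = l1norm N e / 2).
  { unfold l1norm, dZ. rewrite (Rsum_ext N _ (fun j => Rabs (e j))); [field|].
    intros j Hj. unfold sigma. rewrite Hbits by auto. unfold sgn.
    destruct (Rlt_dec (e j) 0); [rewrite Rabs_left by auto|rewrite Rabs_right by lra]; ring. }
  assert (Hnn : 0 <= l1norm N e / 2) by (generalize (l1norm_nonneg N e); lra).
  replace (l1norm N e / 2) with (Rabs (1 / 2 * dZ N e k0)) by (rewrite Hval; apply Rabs_right; lra).
  apply (OpNorm_diag N A (fun k => 1 / 2 * dZ N e k) k0); auto.
  intros k Hk. cbv beta. rewrite Hval, (Rabs_right (l1norm N e / 2)) by lra.
  rewrite Rabs_mult, (Rabs_right (1 / 2)) by lra.
  replace (l1norm N e / 2) with (1 / 2 * l1norm N e) by field.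
  apply Rmult_le_compat_l; [lra|]. eapply Rle_trans; [apply Rabs_Rsum_le|].
  apply Rsum_le. intros j Hj. rewrite Rabs_mult. unfold sigma, sgn.
  replace (Rabs (if Nat.testbit k j then -1 else 1)) with 1
    by (destruct (Nat.testbit k j); unfold Rabs; destruct (Rcase_abs _); lra).
  lra.
Qed.

(** * The distance from [H] to the Lindblad span *)

Section SpanDistance.
Variables (N : nat) (Cm : nat -> nat -> R) (lam : nat -> R) (vv : nat -> nat -> R).
Hypothesis vorth : forall a b, (a < N)%nat -> (b < N)%nat ->
  rdot N (vv a) (vv b) = if Nat.eqb a b then 1 else 0.
Hypothesis veig : forall a i, (a < N)%nat -> (i < N)%nat ->
  Rsum N (fun k => Cm i k * vv a k) = lam a * vv a i.
Hypothesis lampos : forall a, (a < N)%nat -> 0 <= lam a.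

Lemma span_lin_spectral x j : (j < N)%nat ->
  span_lin N lam vv (fun a => sqrt (lam a) * rdot N (vv a) x / 2) j = 1 / 2 * Rsum N (fun k => Cm j k * x k).
Proof.
  intros Hj. unfold span_lin. rewrite <- (spectral_expansion N Cm lam vv vorth veig x j Hj), <- Rsum_scal.
  apply Rsum_ext. intros a Ha. rewrite <- (sqrt_sqrt (lam a) (lampos a Ha)) at 3. field.
Qed.

Lemma best_span_element h v : inCol N Cm v ->
  exists S, InSpan N lam vv S /\ OpNorm N (opSub (Hmain N h) S) (l1dist N h v / 2).
Proof.
  intros [x Hx]. set (c1 := fun a => sqrt (lam a) * rdot N (vv a) x / 2).
  exists (spanElt N lam vv 0 c1 (fun _ _ => 0)). split; [exists 0, c1, (fun _ _ => 0); reflexivity|].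
  apply OpNorm_half_dZ.
  eapply DiagR_ext; [|exact (diag_sub N _ _ _ _ (diag_Hmain N h) (diag_spanElt N lam vv 0 c1 (fun _ _ => 0)))].
  intros k. unfold sign_quad, dZ. rewrite (Rsum_zero N (fun j => Rsum N _)).
  - rewrite (Rsum_ext N (fun j => span_lin N lam vv c1 j * sigma j k) (fun j => 1 / 2 * (v j * sigma j k))).
    + rewrite Rsum_scal, (Rsum_ext N (fun j => (h j - v j) * sigma j k) (fun j => h j * sigma j k - v j * sigma j k))
        by (intros; ring).
      rewrite Rsum_sub. ring.
    + intros j Hj. unfold c1. rewrite span_lin_spectral, <- Hx by auto. ring.
  - intros j _. apply Rsum_zero. intros m _. unfold span_quad. rewrite Rsum_zero; [ring|].
    intros; apply Rsum_zero; intros; ring.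
Qed.

Lemma OpNorm_H_sub_span_ge h b c0 c1 c2 y : Feasible N Cm b ->
  OpNorm N (opSub (Hmain N h) (spanElt N lam vv c0 c1 c2)) y -> rdot N h b / 2 <= y.
Proof.
  intros Hf Hy. set (th := fun j => acos (b j) / 2).
  assert (Hth : forall j, (j < N)%nat -> cos (th j) ^ 2 - sin (th j) ^ 2 = b j)
    by (intros j Hj; apply cos2_sub_sin2_half_acos, Rabs_le_1_bounds, Hf; auto).
  set (dS := sign_quad N c0 (span_lin N lam vv c1) (span_quad N lam vv c2)).
  set (dA := fun k => 1 / 2 * dZ N h k - dS k).
  assert (HD : DiagR N (opSub (Hmain N h) (spanElt N lam vv c0 c1 c2)) dA)
    by exact (diag_sub N _ _ _ _ (diag_Hmain N h) (diag_spanElt N lam vv c0 c1 c2)).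
  assert (Y0 := OpNorm_diag_ge_mean N _ dA y (zeroL N th) HD Hy).
  assert (Y1 := OpNorm_diag_ge_mean N _ dA y (oneL N th) HD Hy).
  rewrite (Rsum_ext _ (fun k => Cnorm2 (zeroL N th k)) (fun k => w0 N th k * 1)),
          (Rsum_ext _ (fun k => Cnorm2 (zeroL N th k) * dA k) (fun k => w0 N th k * dA k)) in Y0
    by (intros; rewrite Cnorm2_zeroL; ring).
  rewrite (Rsum_ext _ (fun k => Cnorm2 (oneL N th k)) (fun k => w1 N th k * 1)),
          (Rsum_ext _ (fun k => Cnorm2 (oneL N th k) * dA k) (fun k => w1 N th k * dA k)) in Y1
    by (intros; rewrite Cnorm2_oneL by auto; ring).
  fold (expect N (w0 N th) (fun _ => 1)) (expect N (w0 N th) dA) in Y0.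
  fold (expect N (w1 N th) (fun _ => 1)) (expect N (w1 N th) dA) in Y1.
  rewrite expect_w0_one in Y0. rewrite expect_w1_one in Y1.
  specialize (Y0 eq_refl). specialize (Y1 eq_refl).
  assert (EH : expect N (w0 N th) (fun k => 1 / 2 * dZ N h k) - expect N (w1 N th) (fun k => 1 / 2 * dZ N h k)
               = rdot N h b).
  { rewrite !expect_Hmain_diag, <- Rmult_minus_distr_l, (expect_w0_sub_w1_sign_quad N th b) by auto. field. }
  assert (ES : expect N (w0 N th) dS - expect N (w1 N th) dS = 0).
  { unfold dS. rewrite (expect_w0_sub_w1_sign_quad N th b) by auto. rewrite rdot_span_lin, Rsum_zero; [ring|].
    intros a Ha. rewrite (Feasible_orth_Lindblad N Cm lam vv veig) by auto. ring. }
  unfold dA in Y0, Y1. rewrite expect_sub in Y0, Y1.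
  generalize (Rle_abs (expect N (w0 N th) (fun k => 1 / 2 * dZ N h k) - expect N (w0 N th) dS))
             (Rle_abs (- (expect N (w1 N th) (fun k => 1 / 2 * dZ N h k) - expect N (w1 N th) dS))).
  rewrite Rabs_Ropp. lra.
Qed.

Lemma span_distance_min h b v : Feasible N Cm b -> inCol N Cm v -> rdot N b h = l1dist N h v ->
  IsMinOf (fun y => exists S, InSpan N lam vv S /\ OpNorm N (opSub (Hmain N h) S) y) (l1dist N h v / 2).
Proof.
  intros Hb Hv E. split.
  - destruct (best_span_element h v Hv) as [S [HS Hnorm]]. exists S; auto.
  - intros y [S [[c0 [c1 [c2 ->]]] Hy]]. rewrite <- E, rdot_comm.
    eapply OpNorm_H_sub_span_ge; eauto.
Qed.

End SpanDistance.

Lemma l1_duality_optimal N Cm h b v : Feasible N Cm b -> inCol N Cm v -> rdot N b h = l1dist N h v ->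
  IsMaxOf (fun y => exists b', Feasible N Cm b' /\ y = rdot N b' h) (rdot N b h) /\
  IsMinOf (fun y => exists v', inCol N Cm v' /\ y = l1dist N h v') (rdot N b h).
Proof.
  intros Hb Hv E. split; split.
  - exists b; auto.
  - intros y [b' [Hb' ->]]. rewrite E. apply (Feasible_weak_duality N Cm); auto.
  - exists v; auto.
  - intros y [v' [Hv' ->]]. apply (Feasible_weak_duality N Cm); auto.
Qed.

Theorem mainTheorem5 (N : nat) (hN : (3 <= N)%nat)
  (h : nat -> R) (Cm : nat -> nat -> R) (lam : nat -> R) (vv : nat -> nat -> R)
  (Csym : forall i j, (i < N)%nat -> (j < N)%nat -> Cm i j = Cm j i)
  (Cpsd : forall x : nat -> R, 0 <= Rsum N (fun i => Rsum N (fun k => x i * Cm i k * x k)))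
  (vorth : forall a b, (a < N)%nat -> (b < N)%nat ->
     rdot N (vv a) (vv b) = if Nat.eqb a b then 1 else 0)
  (veig : forall a i, (a < N)%nat -> (i < N)%nat ->
     Rsum N (fun k => Cm i k * vv a k) = lam a * vv a i)
  (lampos : forall a, (a < N)%nat -> 0 <= lam a)
  (hnot : ~ inCol N Cm h) :
  exists m1 m2 : R,
    IsMaxOf (fun y => exists b, Feasible N Cm b /\ y = rdot N b h) m1 /\
    IsMinOf (fun y => exists v, inCol N Cm v /\ y = l1dist N h v) m1 /\
    IsMinOf (fun y => exists S, InSpan N lam vv S /\ OpNorm N (opSub (Hmain N h) S) y) m2 /\
    m1 = 2 * m2 /\
    (forall b : nat -> R, Feasible N Cm b ->
       (forall b', Feasible N Cm b' -> rdot N b' h <= rdot N b h) ->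
       let theta := fun j => acos (b j) / 2 in
       let P := projP N theta in
       (forall S, InSpan N lam vv S -> exists c : R, forall i k,
            (i < dim N)%nat -> (k < dim N)%nat ->
            opMul N (opMul N P S) P i k = Cmul (RtoC c) (P i k)) /\
       braket N (zeroL N theta) (Hmain N h) (oneL N theta) = C0 /\
       Csub (braket N (zeroL N theta) (Hmain N h) (zeroL N theta))
            (braket N (oneL N theta) (Hmain N h) (oneL N theta)) = RtoC (rdot N h b) /\
       rdot N h b = m1 /\ 0 < m1 /\
       (forall t : R,
          QFI N t (opMul N (opMul N P (Hmain N h)) P) (plusL N theta) = RtoC (t ^ 2 * m1 ^ 2) /\
          QFI N t (opMul N (opMul N P (Hmain N h)) P) (plusL N theta) = RtoC (4 * t ^ 2 * m2 ^ 2))).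
Proof.
  destruct (l1_duality N Cm h) as [bs [vs [Hbs [Hvs E]]]].
  destruct (l1_duality_optimal N Cm h bs vs Hbs Hvs E) as [Hmax Hmin].
  set (m1 := rdot N bs h) in *.
  assert (Hpos : 0 < m1) by (rewrite E; apply (l1dist_pos N Cm); auto).
  exists m1, (m1 / 2).
  split; [exact Hmax|]. split; [exact Hmin|].
  split; [rewrite E; exact (span_distance_min N Cm lam vv vorth veig lampos h bs vs Hbs Hvs E)|]. split; [field|].
  intros b Hb Hopt. cbv zeta.
  assert (Hhb : rdot N h b = m1).
  { rewrite rdot_comm. apply Rle_antisym; [apply Hmax; exists b; auto|apply Hopt; auto]. }
  assert (Hth : forall j, (j < N)%nat -> cos (acos (b j) / 2) ^ 2 - sin (acos (b j) / 2) ^ 2 = b j)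
    by (intros j Hj; apply cos2_sub_sin2_half_acos, Rabs_le_1_bounds, Hb; auto).
  split; [|split; [|split; [|split; [|split]]]]; auto.
  - intros S [c0 [c1 [c2 ->]]]. apply (code_knill_laflamme N hN _ b); auto.
    intros a Ha. eapply Feasible_orth_Lindblad; eauto.
  - apply code_H_offdiag; auto.
  - apply code_H_gap; auto.
  - intros t. rewrite (code_QFI N hN _ b), Hhb by auto. split; f_equal; field.
Qed.
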